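(* If there is a $P$-counting module with data order $K\le 1$, then there is a (non-deterministic, i.e. possibly using $\mathsf{choose}$) $(\lambda n.\,2^{P(n)-1})$-counting module with data order $1$.
   Context: Types are built from a finite set $\mathcal{S}$ of sorts (containing $\mathsf{bool}$ and $\mathsf{list}$) by $\sigma ::= \iota \mid \sigma \times \tau \mid \sigma \Rightarrow \tau$. Type order: $\mathrm{ord}(\iota)=0$ for sorts, $\mathrm{ord}(\sigma\times\tau)=\max(\mathrm{ord}(\sigma),\mathrm{ord}(\tau))$, $\mathrm{ord}(\sigma\Rightarrow\tau)=\max(\mathrm{ord}(\sigma)+1,\mathrm{ord}(\tau))$. Constructors include $\mathsf{true},\mathsf{false}:\mathsf{bool}$, $[]:\mathsf{list}$ and infix $::\ :\mathsf{bool}\Rightarrow\mathsf{list}\Rightarrow\mathsf{list}$; constructors take arguments of order-$0$ types and return a sort. Syntax. Patterns: $\ell ::= x \mid c\,\ell_1\cdots\ell_m$ ($c$ a constructor). Expressions: $s ::= x \mid c \mid f \mid \mathsf{if}\ s_1\ \mathsf{then}\ s_2\ \mathsf{else}\ s_3 \mid \mathsf{choose}\ s_1\cdots s_n \mid (s,t) \mid s\,t$ ($f$ a defined symbol). Clauses have the form $f\,\ell_1\cdots\ell_k = s$; each lhs variable occurs once, rhs variables occur in the lhs, both sides are simply typed with a common type under some type environment $\Gamma$ for the lhs variables, constructors are fully applied, and all clauses for $f$ have the same number $\mathrm{arity}(f)$ of arguments. Sub-expressions: $s \unrhd t$ iff $s = t$ or $s \rhd t$, where $(s_1,s_2)\rhd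 t$, $\mathsf{if}\ s_1\ \mathsf{then}\ s_2\ \mathsf{else}\ s_3 \rhd t$ and $\mathsf{choose}\ s_1\cdots s_n\rhd t$ hold if $s_i \unrhd t$ for some $i$, and $s_1\,s_2 \rhd t$ holds if $s_1 \rhd t$ or $s_2 \unrhd t$. A clause $f\,\ell_1\cdots\ell_k=s$ is cons-free if every $t$ with $s\unrhd t$ of the form $c\,s_1\cdots s_m$ with $c$ a constructor is a data expression or satisfies $\ell_i\unrhd t$ for some $i$. A list of clauses has data order $K$ if all clauses can be typed with environments assigning every variable a type of order $\le K$. Semantics. Data expressions $d ::= c\,d_1\cdots d_m \mid (d,d')$; values $v ::= d \mid (v,w) \mid f\,v_1\cdots v_n$ with $n<\mathrm{arity}(f)$. For a list of clauses $p$, judgements $p,\gamma\vdash s\to w$ and $p\vdash^{\mathrm{call}} f\,v_1\cdots v_n\to w$ are derived by: $p,\gamma\vdash x\to\gamma(x)$; $p,\gamma\vdash f\to w$ if $p\vdash^{\mathrm{call}} f\to w$; $p,\gamma\vdash c\,s_1\cdots s_m\to c\,b_1\cdots b_m$ if $p,\gamma\vdash s_i\to b_i$; $p,\gamma\vdash(s,t)\to(v,w)$ if $s\to v$, $t\to w$; $p,\gamma\vdash\mathsf{choose}\ s_1\cdots s_n\to w$ if $p,\gamma\vdash s_i\to w$ for some $i$; $p,\gamma\vdash\mathsf{if}\ s_1\ \mathsf{then}\ s_2\ \mathsf{else}\ s_3\to w$ if $s_1\to\mathsf{true}$ and $s_2\to w$, or $s_1\to\mathsf{false}$ and $s_3\to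 w$; $p,\gamma\vdash s\,t\to w$ if $s\to f\,v_1\cdots v_n$, $t\to v_{n+1}$ and $p\vdash^{\mathrm{call}} f\,v_1\cdots v_{n+1}\to w$; $p\vdash^{\mathrm{call}} f\,v_1\cdots v_n\to f\,v_1\cdots v_n$ if $n<\mathrm{arity}(f)$; $p\vdash^{\mathrm{call}} f\,v_1\cdots v_k\to w$ if $p,\gamma\vdash s\to w$ where $f\,\ell_1\cdots\ell_k=s$ is the first clause of $p$ with $v_i=\ell_i\gamma$ for all $i$ for some $\gamma$ on the lhs variables. Counting modules. For $P:\mathbb{N}\to\mathbb{N}\setminus\{0\}$, a $P$-counting module is a tuple $(\alpha_\pi,\mathcal{D}_\pi,\mathcal{A}_\pi,[\![\cdot]\!]_\pi,p_\pi)$ where: $\alpha_\pi$ is a type; $\mathcal{D}_\pi$ is a set of fresh defined symbols containing $\mathsf{seed}_\pi:\mathsf{list}\Rightarrow\alpha_\pi$, $\mathsf{pred}_\pi:\mathsf{list}\Rightarrow\alpha_\pi\Rightarrow\alpha_\pi$, $\mathsf{zero}_\pi:\mathsf{list}\Rightarrow\alpha_\pi\Rightarrow\mathsf{bool}$; for each $n\in\mathbb{N}$, $\mathcal{A}^n_\pi$ is a set of values of type $\alpha_\pi$ built over the constructors and $\mathcal{D}_\pi$ and $[\![\cdot]\!]^n_\pi:\mathcal{A}^n_\pi\to\mathbb{N}$ is total; and $p_\pi$ is a list of cons-free clauses on the symbols of $\mathcal{D}_\pi$ such that for every boolean list $cs$ of length $n$: there is a unique value $v$ with $p_\pi\vdash^{\mathrm{call}}\mathsf{seed}_\pi\,cs\to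 v$, and it satisfies $v\in\mathcal{A}^n_\pi$, $[\![v]\!]^n_\pi=P(n)-1$; if $v\in\mathcal{A}^n_\pi$ with $[\![v]\!]^n_\pi=i>0$, there is a unique $w$ with $p_\pi\vdash^{\mathrm{call}}\mathsf{pred}_\pi\,cs\,v\to w$, and $w\in\mathcal{A}^n_\pi$, $[\![w]\!]^n_\pi=i-1$; and for $v\in\mathcal{A}^n_\pi$ with $[\![v]\!]^n_\pi=i$, $p_\pi\vdash^{\mathrm{call}}\mathsf{zero}_\pi\,cs\,v\to\mathsf{true}$ iff $i=0$, and $p_\pi\vdash^{\mathrm{call}}\mathsf{zero}_\pi\,cs\,v\to\mathsf{false}$ iff $i>0$. The module has data order $K$ if $p_\pi$ has data order $K$. *)

From Stdlib Require Import List Arith.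
Import ListNotations.
Set Implicit Arguments.

Inductive ty (Srt : Type) : Type :=
| TSort (s : Srt)
| TProd (a b : ty Srt)
| TArrow (a b : ty Srt).
Arguments TSort {Srt} s.
Arguments TProd {Srt} a b.
Arguments TArrow {Srt} a b.

Fixpoint ord {Srt} (t : ty Srt) : nat :=
  match t with
  | TSort _ => 0
  | TProd a b => Nat.max (ord a) (ord b)
  | TArrow a b => Nat.max (Datatypes.S (ord a)) (ord b)
  end.

Fixpoint arrows {Srt} (ts : list (ty Srt)) (t : ty Srt) : ty Srt :=
  match ts with [] => t | a :: ts' => TArrow a (arrows ts' t) end.

Record signature := {
  sort : Type;
  sort_finite : exists l : list sort, forall s, In s l;
  s_bool : sort;
  s_list : sort;
  s_bool_list : s_bool <> s_list;
  con : Type;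
  con_args : con -> list (ty sort);
  con_res : con -> sort;
  con_args_ord0 : forall c t, In t (con_args c) -> ord t = 0;
  c_true : con; c_false : con; c_nil : con; c_cons : con;
  c_true_ty : con_args c_true = [] /\ con_res c_true = s_bool;
  c_false_ty : con_args c_false = [] /\ con_res c_false = s_bool;
  c_nil_ty : con_args c_nil = [] /\ con_res c_nil = s_list;
  c_cons_ty : con_args c_cons = [TSort s_bool; TSort s_list]
              /\ con_res c_cons = s_list;
  c_true_false : c_true <> c_false;
  c_nil_cons : c_nil <> c_cons
}.

Arguments con_args {s} _.
Arguments con_res {s} _.
Arguments s_bool {s}.
Arguments s_list {s}.
Arguments c_true {s}.
Arguments c_false {s}.
Arguments c_nil {s}.
Arguments c_cons {s}.

Definition fsym := nat.
Definition var := nat.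

Section Lang.
Variable Sg : signature.
Notation Ty := (ty (sort Sg)).
Notation C := (con Sg).

Inductive pat : Type :=
| PVar (x : var)
| PCon (c : C) (args : list pat).

(* constructor applications are written fully applied: ECon c [s1;..;sm] *)
Inductive expr : Type :=
| EVar (x : var)
| ECon (c : C) (args : list expr)
| EFun (f : fsym)
| EIf (s1 s2 s3 : expr)
| EChoose (ss : list expr)
| EPair (s t : expr)
| EApp (s t : expr).

Inductive val : Type :=
| VCon (c : C) (args : list val)
| VPair (v w : val)
| VFun (f : fsym) (args : list val).   (* partial application f v1 .. vn *)

Record clause := mkClause { cl_f : fsym; cl_lhs : list pat; cl_rhs : expr }.
Definition program := list clause.

Fixpoint pat_expr (l : pat) : expr :=
  match l with
  | PVar x => EVar x
  | PCon c ls => ECon c (map pat_expr ls)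
  end.

Fixpoint pat_vars (l : pat) : list var :=
  match l with
  | PVar x => [x]
  | PCon c ls => concat (map pat_vars ls)
  end.

Fixpoint expr_vars (e : expr) : list var :=
  match e with
  | EVar x => [x]
  | ECon _ es => concat (map expr_vars es)
  | EFun _ => []
  | EIf a b c => expr_vars a ++ expr_vars b ++ expr_vars c
  | EChoose es => concat (map expr_vars es)
  | EPair a b => expr_vars a ++ expr_vars b
  | EApp a b => expr_vars a ++ expr_vars b
  end.

Fixpoint expr_fsyms (e : expr) : list fsym :=
  match e with
  | EVar _ => []
  | ECon _ es => concat (map expr_fsyms es)
  | EFun f => [f]
  | EIf a b c => expr_fsyms a ++ expr_fsyms b ++ expr_fsyms c
  | EChoose es => concat (map expr_fsyms es)
  | EPair a b => expr_fsyms a ++ expr_fsyms b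
  | EApp a b => expr_fsyms a ++ expr_fsyms b
  end.

Fixpoint val_fsyms (v : val) : list fsym :=
  match v with
  | VCon _ vs => concat (map val_fsyms vs)
  | VPair a b => val_fsyms a ++ val_fsyms b
  | VFun f vs => f :: concat (map val_fsyms vs)
  end.

Definition lhs_vars (cl : clause) : list var := concat (map pat_vars (cl_lhs cl)).

Definition lhs_expr (cl : clause) : expr :=
  fold_left (fun e l => EApp e (pat_expr l)) (cl_lhs cl) (EFun (cl_f cl)).

(* strict sub-expressions (s |> t); the paper's  c s1 .. sm |> t  iff some si |>= t *)
Fixpoint strict_sub (e : expr) : list expr :=
  match e with
  | EVar _ | EFun _ => []
  | ECon _ es => concat (map (fun s => s :: strict_sub s) es)
  | EIf a b c => (a :: strict_sub a) ++ (b :: strict_sub b) ++ (c :: strict_sub c)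
  | EChoose es => concat (map (fun s => s :: strict_sub s) es)
  | EPair a b => (a :: strict_sub a) ++ (b :: strict_sub b)
  | EApp a b => strict_sub a ++ (b :: strict_sub b)
  end.

(* s |>= t  iff  In t (subexprs s) *)
Definition subexprs (e : expr) : list expr := e :: strict_sub e.

Fixpoint is_data_expr (e : expr) : Prop :=
  match e with
  | ECon _ es => (fix all (l : list expr) : Prop :=
                    match l with [] => True | s :: l' => is_data_expr s /\ all l' end) es
  | EPair a b => is_data_expr a /\ is_data_expr b
  | _ => False
  end.

Definition cons_free_clause (cl : clause) : Prop :=
  forall t, In t (subexprs (cl_rhs cl)) ->
    (exists c es, t = ECon c es) ->
    is_data_expr t \/ exists l, In l (cl_lhs cl) /\ In t (subexprs (pat_expr l)).

Section Typing.
Variable dt : fsym -> Ty.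

Inductive has_type (G : var -> Ty) : expr -> Ty -> Prop :=
| T_Var x : has_type G (EVar x) (G x)
| T_Con c es : has_types G es (con_args c) -> has_type G (ECon c es) (TSort (con_res c))
| T_Fun f : has_type G (EFun f) (dt f)
| T_If a b c t : has_type G a (TSort (@s_bool Sg)) -> has_type G b t -> has_type G c t ->
    has_type G (EIf a b c) t
| T_Choose es t : (forall s, In s es -> has_type G s t) -> has_type G (EChoose es) t
| T_Pair a b s t : has_type G a s -> has_type G b t -> has_type G (EPair a b) (TProd s t)
| T_App a b s t : has_type G a (TArrow s t) -> has_type G b s -> has_type G (EApp a b) t
with has_types (G : var -> Ty) : list expr -> list Ty -> Prop :=
| Ts_nil : has_types G [] []
| Ts_cons e es t ts : has_type G e t -> has_types G es ts -> has_types G (e :: es) (t :: ts).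

Definition clause_typed (G : var -> Ty) (cl : clause) : Prop :=
  exists t, has_type G (lhs_expr cl) t /\ has_type G (cl_rhs cl) t.

Definition wf_clause (cl : clause) : Prop :=
  NoDup (lhs_vars cl) /\
  (forall x, In x (expr_vars (cl_rhs cl)) -> In x (lhs_vars cl)) /\
  exists G, clause_typed G cl.

Definition wf_program (p : program) : Prop :=
  (forall cl, In cl p -> wf_clause cl) /\
  (forall cl1 cl2, In cl1 p -> In cl2 p -> cl_f cl1 = cl_f cl2 ->
     length (cl_lhs cl1) = length (cl_lhs cl2)).

Definition data_order (p : program) (K : nat) : Prop :=
  forall cl, In cl p -> exists G, clause_typed G cl /\
    forall x, In x (lhs_vars cl) -> ord (G x) <= K.

Variable ar : fsym -> nat.
Inductive val_type : val -> Ty -> Prop :=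
| VT_Con c vs : vals_type vs (con_args c) -> val_type (VCon c vs) (TSort (con_res c))
| VT_Pair v w s t : val_type v s -> val_type w t -> val_type (VPair v w) (TProd s t)
| VT_Fun f vs ts t : vals_type vs ts -> length vs < ar f -> dt f = arrows ts t ->
    val_type (VFun f vs) t
with vals_type : list val -> list Ty -> Prop :=
| VTs_nil : vals_type [] []
| VTs_cons v vs t ts : val_type v t -> vals_type vs ts -> vals_type (v :: vs) (t :: ts).
End Typing.

Definition arity (p : program) (f : fsym) : nat :=
  match find (fun cl => Nat.eqb (cl_f cl) f) p with
  | Some cl => length (cl_lhs cl)
  | None => 0
  end.

Fixpoint pat_subst (g : var -> val) (l : pat) : val :=
  match l with
  | PVar x => g x
  | PCon c ls => VCon c (map (pat_subst g) ls)
  end.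

Definition clause_matches (cl : clause) (f : fsym) (vs : list val) : Prop :=
  cl_f cl = f /\ exists g, map (pat_subst g) (cl_lhs cl) = vs.

Inductive eval (p : program) : (var -> val) -> expr -> val -> Prop :=
| E_Var g x : eval p g (EVar x) (g x)
| E_Fun g f w : call p f [] w -> eval p g (EFun f) w
| E_Con g c es bs : eval_list p g es bs -> eval p g (ECon c es) (VCon c bs)
| E_Pair g a b v w : eval p g a v -> eval p g b w -> eval p g (EPair a b) (VPair v w)
| E_Choose g es s w : In s es -> eval p g s w -> eval p g (EChoose es) w
| E_IfT g a b c w : eval p g a (VCon (@c_true Sg) []) -> eval p g b w -> eval p g (EIf a b c) w
| E_IfF g a b c w : eval p g a (VCon (@c_false Sg) []) -> eval p g c w -> eval p g (EIf a b c) w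
| E_App g a b f vs v w : eval p g a (VFun f vs) -> eval p g b v -> call p f (vs ++ [v]) w ->
    eval p g (EApp a b) w
with eval_list (p : program) : (var -> val) -> list expr -> list val -> Prop :=
| EL_nil g : eval_list p g [] []
| EL_cons g e es v vs : eval p g e v -> eval_list p g es vs -> eval_list p g (e :: es) (v :: vs)
with call (p : program) : fsym -> list val -> val -> Prop :=
| C_Partial f vs : length vs < arity p f -> call p f vs (VFun f vs)
| C_Clause p1 cl p2 f vs g w :
    p = p1 ++ cl :: p2 ->
    cl_f cl = f ->
    map (pat_subst g) (cl_lhs cl) = vs ->
    (forall cl', In cl' p1 -> ~ clause_matches cl' f vs) ->   (* first matching clause *)
    eval p g (cl_rhs cl) w ->
    call p f vs w.

Fixpoint blist (cs : list bool) : val :=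
  match cs with
  | [] => VCon (@c_nil Sg) []
  | b :: cs' => VCon (@c_cons Sg) [VCon (if b then @c_true Sg else @c_false Sg) []; blist cs']
  end.

Definition vtrue : val := VCon (@c_true Sg) [].
Definition vfalse : val := VCon (@c_false Sg) [].

Record module := mkModule {
  m_alpha : Ty;
  m_D : list fsym;
  m_dtype : fsym -> Ty;
  m_seed : fsym; m_pred : fsym; m_zero : fsym;
  m_A : nat -> val -> Prop;
  m_interp : nat -> val -> nat;     (* [[.]]^n_pi, used on A^n_pi *)
  m_prog : program
}.

Definition counting_module (P : nat -> nat) (m : module) : Prop :=
  let p := m_prog m in
  let dt := m_dtype m in
  let a := m_alpha m in
  let L := TSort (@s_list Sg) in
  NoDup [m_seed m; m_pred m; m_zero m] /\
  In (m_seed m) (m_D m) /\ In (m_pred m) (m_D m) /\ In (m_zero m) (m_D m) /\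
  dt (m_seed m) = TArrow L a /\
  dt (m_pred m) = TArrow L (TArrow a a) /\
  dt (m_zero m) = TArrow L (TArrow a (TSort (@s_bool Sg))) /\
  wf_program dt p /\
  (forall cl, In cl p -> cons_free_clause cl) /\
  (forall cl, In cl p -> In (cl_f cl) (m_D m) /\
                         forall f, In f (expr_fsyms (cl_rhs cl)) -> In f (m_D m)) /\
  (forall n v, m_A m n v ->
     val_type dt (arity p) v a /\ forall f, In f (val_fsyms v) -> In f (m_D m)) /\
  forall n (cs : list bool), length cs = n ->
    (exists v, call p (m_seed m) [blist cs] v /\
               (forall v', call p (m_seed m) [blist cs] v' -> v' = v) /\
               m_A m n v /\ m_interp m n v = P n - 1) /\
    (forall v i, m_A m n v -> m_interp m n v = i -> i > 0 ->
       exists w, call p (m_pred m) [blist cs; v] w /\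
                 (forall w', call p (m_pred m) [blist cs; v] w' -> w' = w) /\
                 m_A m n w /\ m_interp m n w = i - 1) /\
    (forall v, m_A m n v ->
       (call p (m_zero m) [blist cs; v] vtrue <-> m_interp m n v = 0) /\
       (call p (m_zero m) [blist cs; v] vfalse <-> m_interp m n v > 0)).

Definition module_data_order (m : module) (K : nat) : Prop :=
  data_order (m_dtype m) (m_prog m) K.

End Lang.

(* A counter value [k < 2 ^ (P n - 1)] of the new module is a function [F : bool => alpha],
   with [alpha] the counter type of the given module: [F x] non-deterministically returns
   exactly the given counters [t], [1 <= t <= P n - 1], for which bit [t - 1] of [k] is [x]
   (record [represents]).  Bits are read off, and given counters compared, by recursion
   through the given predecessor and zero test.  The seed is the all-ones function, the
   predecessor keeps bit [j] when a lower bit is set and flips it otherwise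
   ([testbit_pred_iff]), and [k = 0] iff [F false] returns every position.  All arguments
   have type list, bool, [alpha] or [bool => alpha], so the data order is 1 once [alpha] has
   order at most 1; this is forced by the predecessor clause of the given module as soon as
   some [P n > 1], and when [P] is constantly 1 a trivial module does the job. *)

From Stdlib Require Import List Arith Lia Bool Classical.
Import ListNotations.

Set Implicit Arguments.
Unset Strict Implicit.

Lemma map_nth_seq {A} (l : list A) d : map (fun i => nth i l d) (seq 0 (length l)) = l.
Proof.
  apply nth_ext with (d := d) (d' := d); rewrite ?length_map, ?length_seq; auto.
  intros i Hi. pose proof (map_nth (fun j => nth j l d) (seq 0 (length l)) 0 i) as E.
  cbv beta in E. rewrite nth_indep with (d' := nth 0 l d) by (rewrite length_map, length_seq; lia).
  rewrite E, seq_nth; auto.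
Qed.

Lemma app_eq_app_cons_notin {A} (l1 l2 p1 p2 : list A) x :
  l1 ++ l2 = p1 ++ x :: p2 -> ~ In x l1 ->
  exists p1', p1 = l1 ++ p1' /\ l2 = p1' ++ x :: p2.
Proof.
  intros E Hx. apply app_eq_app in E as (l & [[-> E]|[-> E]]).
  - destruct l as [|y l]; simpl in E.
    + exists []. rewrite !app_nil_r. auto.
    + injection E as -> _. exfalso. apply Hx. apply in_or_app. right. left. reflexivity.
  - eauto.
Qed.

Lemma find_app_none {A} (P : A -> bool) l1 l2 : (forall x, In x l1 -> P x = false) ->
  find P (l1 ++ l2) = find P l2.
Proof. induction l1 as [|x l1 IH]; simpl; intros H; auto. rewrite H; auto. Qed.

Lemma incl_concat_map {A B} (h : A -> list B) a l : In a l -> incl (h a) (concat (map h l)).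
Proof. intros Hin b Hb. apply in_concat. exists (h a). split; auto. apply in_map. exact Hin. Qed.

(** * Evaluation *)

Notation guard c e := (EIf c e (EChoose [])).

Section Evaluation.
Variable Sg : signature.
Implicit Types (p : program Sg) (g : var -> val Sg) (w v : val Sg) (vs : list (val Sg))
  (e : expr Sg) (es : list (expr Sg)) (cl : clause Sg) (f : fsym).

Scheme eval_mut := Induction for eval Sort Prop
with eval_list_mut := Induction for eval_list Sort Prop
with call_mut := Induction for call Sort Prop.
Combined Scheme eval_call_mut from eval_mut, eval_list_mut, call_mut.

Definition consistent_arity p := forall cl1 cl2, In cl1 p -> In cl2 p ->
  cl_f cl1 = cl_f cl2 -> length (cl_lhs cl1) = length (cl_lhs cl2).

Lemma arity_clause p cl :
  consistent_arity p -> In cl p -> arity p (cl_f cl) = length (cl_lhs cl).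
Proof.
  intros Hp Hcl. unfold arity.
  destruct (find (fun c => Nat.eqb (cl_f c) (cl_f cl)) p) eqn:E.
  - apply find_some in E as [Hin Hf]. apply Nat.eqb_eq in Hf. auto.
  - eapply find_none in E; eauto. rewrite Nat.eqb_refl in E. discriminate.
Qed.

Lemma arity_pos_clause p f : 0 < arity p f -> exists cl, In cl p /\ cl_f cl = f.
Proof.
  unfold arity. destruct (find (fun c => Nat.eqb (cl_f c) f) p) eqn:E; [|lia].
  apply find_some in E as [Hin Hf]. apply Nat.eqb_eq in Hf. eauto.
Qed.

Lemma call_length p f vs w : consistent_arity p -> call p f vs w -> length vs <= arity p f.
Proof.
  intros Hp [f' vs' Hlt|p1 cl p2 f' vs' g w' Hq <- <- _ _]; [lia|].
  rewrite length_map, arity_clause; auto.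
  rewrite Hq. apply in_or_app. right. left. reflexivity.
Qed.

Lemma call_partial_iff p f vs w : consistent_arity p -> length vs < arity p f ->
  call p f vs w <-> w = VFun f vs.
Proof.
  intros Hp Hlt. split; [|intros ->; constructor; exact Hlt].
  intros H. destruct H as [f' vs' _|p1 cl p2 f' vs' g w' Hq Hf Hm _ _]; [reflexivity|].
  exfalso. subst f' vs'. rewrite length_map, arity_clause in Hlt; [lia|auto|].
  rewrite Hq. apply in_or_app. right. left. reflexivity.
Qed.

Lemma eval_var_iff p g x w : eval p g (EVar Sg x) w <-> w = g x.
Proof. split; [intros H; inversion H; auto | intros ->; constructor]. Qed.

Lemma eval_fun_iff p g f w : eval p g (EFun Sg f) w <-> call p f [] w.
Proof. split; [intros H; inversion H; auto | constructor; auto]. Qed.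

Lemma eval_app_iff p g a e w : eval p g (EApp a e) w <->
  exists f vs v, eval p g a (VFun f vs) /\ eval p g e v /\ call p f (vs ++ [v]) w.
Proof.
  split; [intros H; inversion H; subst; eauto 10|].
  intros (f & vs & v & Ha & He & Hc). econstructor; eauto.
Qed.

Lemma eval_if_iff p g c e1 e2 w : eval p g (EIf c e1 e2) w <->
  (eval p g c (vtrue Sg) /\ eval p g e1 w) \/ (eval p g c (vfalse Sg) /\ eval p g e2 w).
Proof.
  split; [intros H; inversion H; subst; auto|].
  intros [[Hc H]|[Hc H]]; [apply E_IfT|apply E_IfF]; auto.
Qed.

Lemma eval_choose_iff p g es w : eval p g (EChoose es) w <-> exists e, In e es /\ eval p g e w.
Proof.
  split; [intros H; inversion H; subst; eauto|].
  intros (e & Hin & He). econstructor; eauto.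
Qed.

Lemma eval_con_nil_iff p g c w : eval p g (ECon c []) w <-> w = VCon c [].
Proof.
  split; [|intros ->; repeat constructor].
  intros H. inversion H as [| |g' c' es bs Hl| | | | |]; subst. inversion Hl. reflexivity.
Qed.

Lemma eval_choose_pair_iff p g e1 e2 w :
  eval p g (EChoose [e1; e2]) w <-> eval p g e1 w \/ eval p g e2 w.
Proof.
  rewrite eval_choose_iff. split.
  - intros (e & [<-|[<-|[]]] & He); auto.
  - intros [He|He]; eexists; split; eauto; simpl; auto.
Qed.

Lemma eval_choose_nil_iff p g w : eval p g (EChoose []) w <-> False.
Proof. rewrite eval_choose_iff. firstorder. Qed.

Lemma eval_guard_iff p g c e w :
  eval p g (guard c e) w <-> eval p g c (vtrue Sg) /\ eval p g e w.
Proof.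
  rewrite eval_if_iff, eval_choose_iff. split; [|auto].
  intros [H|(_ & _ & [] & _)]. exact H.
Qed.

Lemma eval_list_nil_iff p g vs : eval_list p g [] vs <-> vs = [].
Proof. split; [intros H; inversion H; auto | intros ->; constructor]. Qed.

Lemma eval_list_snoc_iff p g es e vs : eval_list p g (es ++ [e]) vs <->
  exists vs' v, vs = vs' ++ [v] /\ eval_list p g es vs' /\ eval p g e v.
Proof.
  revert vs; induction es as [|e' es IH]; intros vs; simpl; split.
  - intros H. inversion H as [|g' e1 es1 v vs1 He Hl]; subst. inversion Hl; subst.
    exists [], v. repeat constructor; auto.
  - intros (vs' & v & -> & Hl & He). inversion Hl; subst. repeat constructor; auto.
  - intros H. inversion H as [|g' e1 es1 v vs1 He Hl]; subst.
    apply IH in Hl as (vs' & v' & -> & Hl & He'). exists (v :: vs'), v'.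
    repeat split; auto. constructor; auto.
  - intros (vs' & v & -> & Hl & He). inversion Hl; subst. constructor; auto.
    apply IH. eauto.
Qed.

Lemma eval_list_length p g es vs : eval_list p g es vs -> length vs = length es.
Proof. induction 1; simpl; auto. Qed.

Definition apps e es : expr Sg := fold_left (fun a b => EApp a b) es e.

Lemma eval_apps_iff p g f es w : consistent_arity p -> length es <= arity p f ->
  eval p g (apps (EFun Sg f) es) w <-> exists vs, eval_list p g es vs /\ call p f vs w.
Proof.
  intros Hp. revert w. induction es as [|e es IH] using rev_ind; intros w Hlen.
  - simpl. rewrite eval_fun_iff. split; [|intros (vs & Hl & Hc); inversion Hl; subst; auto].
    exists []. split; [constructor|auto].
  - unfold apps. rewrite fold_left_app. fold (apps (EFun Sg f) es). simpl.
    rewrite length_app in Hlen. simpl in Hlen. rewrite eval_app_iff. split.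
    + intros (f' & vs' & v & Hf & He & Hc).
      apply IH in Hf as (vs & Hl & Hc'); [|lia].
      apply call_partial_iff in Hc' as [= -> ->]; auto;
        [|rewrite (eval_list_length Hl); lia].
      exists (vs ++ [v]). split; auto. apply eval_list_snoc_iff. eauto.
    + intros (vs & Hl & Hc). apply eval_list_snoc_iff in Hl as (vs' & v & -> & Hl & He).
      exists f, vs', v. repeat split; auto. apply IH; [lia|].
      exists vs'. split; auto. apply call_partial_iff; auto.
      rewrite (eval_list_length Hl). lia.
Qed.

Definition evals_to p g e a := forall v, eval p g e v <-> v = a.

Lemma evals_to_var p g x : evals_to p g (EVar Sg x) (g x).
Proof. intros v. apply eval_var_iff. Qed.

Lemma evals_to_con_nil p g c : evals_to p g (ECon c []) (VCon c []).
Proof. intros v. apply eval_con_nil_iff. Qed.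

Lemma eval_list_evals_to p g es ws vs : Forall2 (evals_to p g) es ws ->
  eval_list p g es vs <-> vs = ws.
Proof.
  intros H. revert vs. induction H as [|e a es ws Ha Hs IH]; intros vs.
  - apply eval_list_nil_iff.
  - split.
    + intros Hl. inversion Hl; subst. f_equal; [apply Ha|apply IH]; auto.
    + intros ->. constructor; [apply Ha|apply IH]; auto.
Qed.

Lemma eval_apps_evals_to p g f es ws w : consistent_arity p -> length es <= arity p f ->
  Forall2 (evals_to p g) es ws ->
  eval p g (apps (EFun Sg f) es) w <-> call p f ws w.
Proof.
  intros Hp Hlen Hs. rewrite eval_apps_iff; auto. split.
  - intros (vs & Hl & Hc). apply (eval_list_evals_to _ Hs) in Hl. subst. exact Hc.
  - intros Hc. exists ws. split; auto. apply (eval_list_evals_to _ Hs). reflexivity.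
Qed.

Lemma eval_apps_evals_to_snoc p g f es e ws w : consistent_arity p ->
  length es < arity p f -> Forall2 (evals_to p g) es ws ->
  eval p g (apps (EFun Sg f) (es ++ [e])) w <->
  exists v, eval p g e v /\ call p f (ws ++ [v]) w.
Proof.
  intros Hp Hlen Hs. rewrite eval_apps_iff; [|auto|rewrite length_app; simpl; lia]. split.
  - intros (vs & Hl & Hc). apply eval_list_snoc_iff in Hl as (vs' & v & -> & Hl & He).
    apply (eval_list_evals_to _ Hs) in Hl. subst. eauto.
  - intros (v & He & Hc). exists (ws ++ [v]). split; auto.
    apply eval_list_snoc_iff. exists ws, v. repeat split; auto.
    apply (eval_list_evals_to _ Hs). reflexivity.
Qed.

Definition apply_val p (F v w : val Sg) : Prop :=
  match F with VFun f vs => call p f (vs ++ [v]) w | _ => False end.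

Lemma eval_app_var_iff p g x e w :
  eval p g (EApp (EVar Sg x) e) w <-> exists v, eval p g e v /\ apply_val p (g x) v w.
Proof.
  rewrite eval_app_iff. split.
  - intros (f & vs & v & Hx & He & Hc). apply eval_var_iff in Hx. rewrite <- Hx. eauto.
  - intros (v & He & Hc). unfold apply_val in Hc. destruct (g x) eqn:E; try contradiction.
    exists f, args, v. rewrite eval_var_iff. auto.
Qed.

Lemma eval_env_ext p g e w : eval p g e w ->
  forall g', (forall x, In x (expr_vars e) -> g' x = g x) -> eval p g' e w.
Proof.
  intros H. induction H using eval_mut with
    (P0 := fun g es vs _ => forall g',
       (forall x, In x (concat (map (@expr_vars Sg) es)) -> g' x = g x) -> eval_list p g' es vs)
    (P1 := fun _ _ _ _ => True); simpl; try (intros g' Hg); auto.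
  - rewrite <- Hg; [constructor|left; reflexivity].
  - constructor. auto.
  - constructor. auto.
  - constructor; [apply IHeval1|apply IHeval2]; intros x Hx; apply Hg, in_or_app; auto.
  - econstructor; [eauto|]. apply IHeval. intros x Hx. apply Hg.
    eapply incl_concat_map; eauto.
  - apply E_IfT; [apply IHeval1|apply IHeval2]; intros x Hx; apply Hg; rewrite !in_app_iff; auto.
  - apply E_IfF; [apply IHeval1|apply IHeval2]; intros x Hx; apply Hg; rewrite !in_app_iff; auto.
  - econstructor; [apply IHeval1|apply IHeval2|eauto]; intros x Hx; apply Hg, in_or_app; auto.
  - constructor.
  - constructor; [apply IHeval|apply IHeval0]; intros x Hx; apply Hg, in_or_app; auto.
Qed.

Definition var_pats k : list (pat Sg) := map (@PVar Sg) (seq 0 k).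

Definition env vs (x : var) : val Sg := nth x vs (vtrue Sg).

Lemma map_subst_var_pats g k : map (pat_subst g) (var_pats k) = map g (seq 0 k).
Proof. unfold var_pats. rewrite map_map. reflexivity. Qed.

Lemma first_clause_of p cl : In cl p ->
  (forall cl', In cl' p -> cl_f cl' = cl_f cl -> cl' = cl) ->
  exists p1 p2, p = p1 ++ cl :: p2 /\ forall cl', In cl' p1 -> cl_f cl' <> cl_f cl.
Proof.
  induction p as [|c p IH]; simpl; intros Hin Hu; [contradiction|].
  destruct (Nat.eq_dec (cl_f c) (cl_f cl)) as [E|E].
  - exists [], p. rewrite (Hu c (or_introl eq_refl) E). split; auto.
  - destruct Hin as [->|Hin]; [contradiction|].
    destruct IH as (p1 & p2 & -> & H); auto.
    exists (c :: p1), p2. split; auto. intros cl' [<-|Hc]; auto.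
Qed.

Lemma call_var_clause p cl vs w : consistent_arity p -> In cl p ->
  (forall cl', In cl' p -> cl_f cl' = cl_f cl -> cl' = cl) ->
  cl_lhs cl = var_pats (length vs) ->
  (forall x, In x (expr_vars (cl_rhs cl)) -> x < length vs) ->
  call p (cl_f cl) vs w <-> eval p (env vs) (cl_rhs cl) w.
Proof.
  intros Hp Hin Hu Hlhs Hvars. split.
  - intros H. remember (cl_f cl) as f eqn:Ef.
    destruct H as [f vs' Hlt|p1 cl0 p2 f vs' g w' Hq Hf Hm _ Hev].
    + subst f. rewrite arity_clause, Hlhs in Hlt; auto.
      unfold var_pats in Hlt. rewrite length_map, length_seq in Hlt. lia.
    + assert (cl0 = cl) as ->.
      { apply Hu; [|congruence]. rewrite Hq. apply in_or_app. right. left. reflexivity. }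
      apply (eval_env_ext Hev). intros x Hx.
      specialize (Hvars x Hx). rewrite <- Hm, Hlhs, map_subst_var_pats. unfold env.
      rewrite nth_indep with (d' := g 0) by (rewrite length_map, length_seq; lia).
      rewrite map_nth, seq_nth; auto.
  - intros Hev. destruct (first_clause_of Hin Hu) as (p1 & p2 & Hq & Hfirst).
    apply C_Clause with p1 cl p2 (env vs); auto.
    + rewrite Hlhs, map_subst_var_pats. apply map_nth_seq.
    + intros cl' Hin' [Hf _]. exact (Hfirst cl' Hin' Hf).
Qed.

End Evaluation.

(** * Extending a program by clauses for fresh symbols *)

Section Extension.
Variable Sg : signature.
Implicit Types (g : var -> val Sg) (w v : val Sg) (vs : list (val Sg))
  (e : expr Sg) (es : list (expr Sg)) (cl : clause Sg) (f : fsym).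
Variables (p ext : program Sg) (D : list fsym).
Hypothesis p_closed : forall cl, In cl p -> In (cl_f cl) D /\ incl (expr_fsyms (cl_rhs cl)) D.
Hypothesis p_rhs_vars : forall cl, In cl p -> incl (expr_vars (cl_rhs cl)) (lhs_vars cl).
Hypothesis ext_fresh : forall cl, In cl ext -> ~ In (cl_f cl) D.

Lemma arity_extend f : In f D -> arity (ext ++ p) f = arity p f.
Proof.
  intros Hf. unfold arity. rewrite find_app_none; auto.
  intros cl Hcl. apply Nat.eqb_neq. intros <-. exact (ext_fresh Hcl Hf).
Qed.

Lemma eval_extend :
  (forall g e w, eval p g e w -> eval (ext ++ p) g e w) /\
  (forall g es vs, eval_list p g es vs -> eval_list (ext ++ p) g es vs) /\
  (forall f vs w, call p f vs w -> call (ext ++ p) f vs w).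
Proof.
  apply eval_call_mut; intros; try (econstructor; eauto; fail).
  - apply C_Partial. destruct (@arity_pos_clause Sg p f) as (cl & Hcl & <-); [lia|].
    rewrite arity_extend; auto. apply p_closed. exact Hcl.
  - assert (Hcl : In cl p) by (rewrite e; apply in_or_app; right; left; reflexivity).
    apply C_Clause with (ext ++ p1) cl p2 g; auto.
    + rewrite e, app_assoc. reflexivity.
    + intros cl' Hin Hm. apply in_app_or in Hin as [Hin|Hin]; [|exact (n cl' Hin Hm)].
      destruct Hm as [Hf _]. apply (ext_fresh Hin). rewrite Hf, <- e0. apply p_closed, Hcl.
Qed.

Definition vals_over vs := incl (concat (map (@val_fsyms Sg) vs)) D.

Lemma pat_subst_fsyms g : forall l x, In x (pat_vars l) ->
  incl (val_fsyms (g x)) (val_fsyms (pat_subst g l)).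
Proof.
  fix IH 1. intros [y|c ls] x Hx; simpl in *.
  - destruct Hx as [<-|[]]. apply incl_refl.
  - induction ls as [|l ls IHls]; simpl in *; [contradiction|].
    apply in_app_or in Hx as [Hx|Hx].
    + apply incl_appl. apply IH; auto.
    + apply incl_appr. apply IHls; auto.
Qed.

Lemma match_env_over g cl vs : In cl p -> map (pat_subst g) (cl_lhs cl) = vs -> vals_over vs ->
  forall x, In x (expr_vars (cl_rhs cl)) -> incl (val_fsyms (g x)) D.
Proof.
  intros Hcl Hm Hvs x Hx. apply p_rhs_vars in Hx; auto.
  apply in_concat in Hx as (xs & Hxs & Hx). apply in_map_iff in Hxs as (l & <- & Hl).
  eapply incl_tran; [apply pat_subst_fsyms; eauto|].
  eapply incl_tran; [|apply Hvs]. subst vs. apply incl_concat_map, in_map, Hl.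
Qed.

Lemma eval_restrict :
  (forall g e w, eval (ext ++ p) g e w -> incl (expr_fsyms e) D ->
     (forall x, In x (expr_vars e) -> incl (val_fsyms (g x)) D) ->
     eval p g e w /\ incl (val_fsyms w) D) /\
  (forall g es vs, eval_list (ext ++ p) g es vs -> incl (concat (map (@expr_fsyms Sg) es)) D ->
     (forall x, In x (concat (map (@expr_vars Sg) es)) -> incl (val_fsyms (g x)) D) ->
     eval_list p g es vs /\ vals_over vs) /\
  (forall f vs w, call (ext ++ p) f vs w -> In f D -> vals_over vs ->
     call p f vs w /\ incl (val_fsyms w) D).
Proof.
  unfold vals_over. apply eval_call_mut; simpl; intros.
  - split; [constructor|]. apply H0. left. reflexivity.
  - destruct H as [Hc Hw]; [apply H0; left; reflexivity|intros ? []|].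
    split; [constructor|]; auto.
  - destruct H as [Hl Hw]; auto. split; [constructor|]; auto.
  - apply incl_app_inv in H1 as [Ha Hb].
    destruct H as [Ha' Hv]; auto; [intros; apply H2, in_or_app; auto|].
    destruct H0 as [Hb' Hw]; auto; [intros; apply H2, in_or_app; auto|].
    split; [constructor|apply incl_app]; auto.
  - destruct H as [Hs Hw].
    + eapply incl_tran; [|eauto]. apply incl_concat_map. exact i.
    + intros x Hx. apply H1. eapply incl_concat_map; eauto.
    + split; [econstructor|]; eauto.
  - apply incl_app_inv in H1 as [Ha Hb]. apply incl_app_inv in Hb as [Hb Hc].
    destruct H as [Ha' _]; auto; [intros; apply H2, in_or_app; auto|].
    destruct H0 as [Hb' Hw]; auto; [intros; apply H2; rewrite !in_app_iff; auto|].
    split; [apply E_IfT|]; auto.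
  - apply incl_app_inv in H1 as [Ha Hb]. apply incl_app_inv in Hb as [Hb Hc].
    destruct H as [Ha' _]; auto; [intros; apply H2, in_or_app; auto|].
    destruct H0 as [Hc' Hw]; auto; [intros; apply H2; rewrite !in_app_iff; auto|].
    split; [apply E_IfF|]; auto.
  - apply incl_app_inv in H2 as [Ha Hb].
    destruct H as [Ha' HF]; auto; [intros; apply H3, in_or_app; auto|].
    destruct H0 as [Hb' Hv]; auto; [intros; apply H3, in_or_app; auto|].
    simpl in HF. destruct H1 as [Hc Hw].
    + apply HF. left. reflexivity.
    + rewrite map_app, concat_app. simpl. rewrite app_nil_r.
      apply incl_app; auto. intros h Hh. apply HF. right. exact Hh.
    + split; [econstructor|]; eauto.
  - split; [constructor|intros ? []].
  - apply incl_app_inv in H1 as [Ha Hb].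
    destruct H as [Ha' Hv]; auto; [intros; apply H2, in_or_app; auto|].
    destruct H0 as [Hb' Hvs]; auto; [intros; apply H2, in_or_app; auto|].
    split; [constructor|apply incl_app]; auto.
  - split; [constructor; rewrite <- arity_extend; auto|].
    intros h [<-|Hh]; auto.
  - assert (Hcl_ext : ~ In cl ext) by (intros Hc; apply (ext_fresh Hc); subst f; auto).
    destruct (app_eq_app_cons_notin e Hcl_ext) as (p1' & -> & Hp).
    assert (Hcl : In cl p) by (rewrite Hp; apply in_or_app; right; left; reflexivity).
    destruct H as [Hev Hw]; [apply p_closed, Hcl|eapply match_env_over; eauto|].
    split; auto. eapply C_Clause; eauto. intros cl' Hin. apply n, in_or_app. auto.
Qed.

Lemma call_extend_iff f vs w : In f D -> vals_over vs ->
  call (ext ++ p) f vs w <-> call p f vs w.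
Proof.
  intros Hf Hvs. split.
  - intros H. apply (proj2 (proj2 eval_restrict)); auto.
  - apply (proj2 (proj2 eval_extend)).
Qed.

End Extension.

(** * Typing *)

Section Typing.
Variable Sg : signature.

Scheme has_type_mut := Induction for has_type Sort Prop
with has_types_mut := Induction for has_types Sort Prop.

Lemma has_type_change_symbols (dt1 dt2 : fsym -> ty (sort Sg)) G e t :
  has_type dt1 G e t -> (forall f, In f (expr_fsyms e) -> dt2 f = dt1 f) -> has_type dt2 G e t.
Proof.
  intros H. induction H using has_type_mut with
    (P0 := fun es ts _ => (forall f, In f (concat (map (@expr_fsyms Sg) es)) -> dt2 f = dt1 f) ->
       has_types dt2 G es ts); simpl; intros Hdt.
  - constructor.
  - constructor. auto.
  - rewrite <- Hdt by (left; reflexivity). constructor.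
  - constructor; [apply IHhas_type1|apply IHhas_type2|apply IHhas_type3];
      intros; apply Hdt; rewrite !in_app_iff; auto.
  - constructor. intros s Hs. apply H; auto. intros f Hf. apply Hdt.
    eapply incl_concat_map; [apply Hs|exact Hf].
  - constructor; [apply IHhas_type1|apply IHhas_type2]; intros; apply Hdt, in_or_app; auto.
  - econstructor; [apply IHhas_type1|apply IHhas_type2]; intros; apply Hdt, in_or_app; auto.
  - constructor.
  - constructor; [apply IHhas_type|apply IHhas_type0]; intros; apply Hdt, in_or_app; auto.
Qed.

Lemma pat_expr_fsyms : forall l : pat Sg, expr_fsyms (pat_expr l) = [].
Proof.
  fix IH 1. intros [x|c ls]; simpl; auto.
  induction ls as [|l ls IHls]; simpl; auto. rewrite IH. exact IHls.
Qed.

Lemma lhs_expr_fsyms (cl : clause Sg) : incl (expr_fsyms (lhs_expr cl)) [cl_f cl].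
Proof.
  unfold lhs_expr. assert (H : incl (expr_fsyms (EFun Sg (cl_f cl))) [cl_f cl]) by apply incl_refl.
  revert H. generalize (EFun Sg (cl_f cl)).
  induction (cl_lhs cl) as [|l ls IH]; simpl; intros e He; auto.
  apply IH. simpl. rewrite pat_expr_fsyms, app_nil_r. exact He.
Qed.

Lemma has_type_apply_vars dt G (xs : list var) : forall e t,
  has_type dt G e (arrows (map G xs) t) ->
  has_type dt G (fold_left (fun e l => EApp e (pat_expr l)) (map (@PVar Sg) xs) e) t.
Proof.
  induction xs as [|x xs IH]; simpl; intros e t He; auto.
  apply IH. econstructor; [exact He|constructor].
Qed.

Lemma lhs_vars_var_pats k : concat (map (@pat_vars Sg) (var_pats Sg k)) = seq 0 k.
Proof.
  unfold var_pats. generalize (seq 0 k). induction l as [|x l IH]; simpl; [reflexivity|].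
  rewrite IH. reflexivity.
Qed.

Lemma val_type_con_nil dt ar (c : con Sg) :
  con_args c = [] -> val_type dt ar (VCon c []) (TSort (con_res c)).
Proof. intros Hc. constructor. rewrite Hc. constructor. Qed.

Lemma blist_val_type dt ar cs : val_type dt ar (blist Sg cs) (TSort s_list).
Proof.
  destruct (@c_nil_ty Sg) as [Hn Hnr]. destruct (@c_cons_ty Sg) as [Hc Hcr].
  destruct (@c_true_ty Sg) as [Ht Htr]. destruct (@c_false_ty Sg) as [Hf Hfr].
  induction cs as [|x cs IH]; simpl.
  - rewrite <- Hnr. apply val_type_con_nil, Hn.
  - rewrite <- Hcr. constructor. rewrite Hc. repeat constructor; auto.
    destruct x; [rewrite <- Htr|rewrite <- Hfr]; apply val_type_con_nil; auto.
Qed.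

Lemma has_type_app_inv dt G (a e : expr Sg) t : has_type dt G (EApp a e) t ->
  exists s, has_type dt G a (TArrow s t) /\ has_type dt G e s.
Proof. intros H. inversion H; subst. eauto. Qed.

Lemma has_type_fun_inv dt G f (t : ty (sort Sg)) : has_type dt G (EFun Sg f) t -> t = dt f.
Proof. intros H. inversion H. reflexivity. Qed.

Lemma has_type_var_inv dt G x (t : ty (sort Sg)) : has_type dt G (EVar Sg x) t -> t = G x.
Proof. intros H. inversion H. reflexivity. Qed.

Lemma has_type_con_inv dt G c es (t : ty (sort Sg)) :
  has_type dt G (ECon c es) t -> t = TSort (con_res c).
Proof. intros H. inversion H. reflexivity. Qed.

Lemma has_type_fold_apps dt G (ls : list (pat Sg)) : forall e t,
  has_type dt G (fold_left (fun e l => EApp e (pat_expr l)) ls e) t ->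
  exists t', has_type dt G e t'.
Proof.
  induction ls as [|l ls IH]; simpl; intros e t He; eauto.
  apply IH in He as (t' & He). inversion He; subst. eauto.
Qed.

Lemma data_order_mono dt (p : program Sg) K K' :
  K <= K' -> data_order dt p K -> data_order dt p K'.
Proof.
  intros HK Hp cl Hcl. destruct (Hp cl Hcl) as (G & Hty & Hord).
  exists G. split; [exact Hty|]. intros x Hx. specialize (Hord x Hx). lia.
Qed.

End Typing.

(** * Bits of a predecessor *)

Lemma div2_double_pred h : 0 < h -> Nat.div2 (2 * h - 1) = h - 1.
Proof.
  intros H. replace (2 * h - 1) with (S (2 * (h - 1))) by lia.
  apply Nat.div2_succ_double.
Qed.

Lemma testbit_pred_low_clear j : forall k, 0 < k ->
  (forall t, t < j -> Nat.testbit k t = false) ->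
  Nat.testbit (k - 1) j = negb (Nat.testbit k j).
Proof.
  induction j as [|j IH]; intros k Hk Hlow.
  - destruct k as [|k]; [lia|]. replace (S k - 1) with k by lia. simpl Nat.testbit.
    rewrite Nat.odd_succ, <- Nat.negb_odd, negb_involutive. reflexivity.
  - destruct (Nat.Even_or_Odd k) as [[h ->]|[h ->]].
    + cbn [Nat.testbit]. rewrite Nat.div2_double, div2_double_pred by lia. apply IH; [lia|].
      intros t Ht. rewrite <- (Nat.double_bits_succ h t). apply Hlow. lia.
    + specialize (Hlow 0 ltac:(lia)). rewrite Nat.testbit_odd_0 in Hlow. discriminate.
Qed.

Lemma testbit_pred_low_set j : forall k, 0 < k ->
  (exists t, t < j /\ Nat.testbit k t = true) ->
  Nat.testbit (k - 1) j = Nat.testbit k j.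
Proof.
  induction j as [|j IH]; intros k Hk (t & Ht & Hbit); [lia|].
  cbn [Nat.testbit]. destruct (Nat.Even_or_Odd k) as [[h ->]|[h ->]].
  - rewrite Nat.div2_double, div2_double_pred by lia.
    destruct t as [|t]; [rewrite Nat.testbit_even_0 in Hbit; discriminate|].
    rewrite Nat.double_bits_succ in Hbit. apply IH; [lia|]. exists t. split; [lia|auto].
  - replace (2 * h + 1 - 1) with (2 * h) by lia.
    rewrite Nat.div2_double, Nat.add_1_r, Nat.div2_succ_double. reflexivity.
Qed.

Lemma low_bits_dec k j :
  (exists t, t < j /\ Nat.testbit k t = true) \/ (forall t, t < j -> Nat.testbit k t = false).
Proof.
  destruct (existsb (Nat.testbit k) (seq 0 j)) eqn:E; [left|right].
  - apply existsb_exists in E as (t & Ht & Hbit). apply in_seq in Ht. exists t. split; [lia|auto].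
  - intros t Ht. apply not_true_is_false. intros Hbit.
    rewrite <- not_true_iff_false, existsb_exists in E. apply E.
    exists t. split; auto. apply in_seq. lia.
Qed.

Lemma testbit_pred_iff k j x : 0 < k ->
  Nat.testbit (k - 1) j = x <->
  (Nat.testbit k j = x /\ exists t, t < j /\ Nat.testbit k t = true) \/
  (Nat.testbit k j = negb x /\ forall t, t < j -> Nat.testbit k t = false).
Proof.
  intros Hk. destruct (low_bits_dec k j) as [Hset|Hclear].
  - rewrite testbit_pred_low_set by auto. split; [intros; left; auto|].
    intros [[Hb _]|[_ Hall]]; auto.
    destruct Hset as (t & Ht & Hb). rewrite Hall in Hb by exact Ht. discriminate.
  - rewrite testbit_pred_low_clear by auto. split.
    + intros <-. right. rewrite negb_involutive. auto.
    + intros [[_ (t & Ht & Hb)]|[-> _]]; [|apply negb_involutive].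
      rewrite Hclear in Hb by exact Ht. discriminate.
Qed.

Lemma low_bits_clear_0 m k : k < 2 ^ m ->
  (forall t, t < m -> Nat.testbit k t = false) -> k = 0.
Proof.
  intros Hk Hlow. apply Nat.bits_inj_0. intros t.
  destruct (Nat.lt_ge_cases t m) as [Ht|Ht]; auto.
  destruct (Nat.eq_dec k 0) as [->|Hk0]; [apply Nat.bits_0|].
  apply Nat.bits_above_log2. apply Nat.log2_lt_pow2 in Hk; lia.
Qed.

Lemma testbit_ones m t : t < m -> Nat.testbit (2 ^ m - 1) t = true.
Proof. intros Ht. rewrite Nat.sub_1_r, <- Nat.ones_equiv. apply Nat.ones_spec_low. exact Ht. Qed.

(** * The exponential counter *)

Section Construction.
Variable Sg : signature.
Variable P : nat -> nat.
Variable m : module Sg.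
Hypothesis m_counting : counting_module P m.
Hypothesis m_order : module_data_order m 1.
Hypothesis pred_binary : 1 < arity (m_prog m) (m_pred m).
Hypothesis alpha_order : ord (m_alpha m) <= 1.
Variable b : nat.
Hypothesis b_fresh : forall k, ~ In (b + k) (m_D m).

Local Notation p := (m_prog m).
Local Notation D := (m_D m).
Local Notation dt := (m_dtype m).
Local Notation s0 := (m_seed m).
Local Notation p0 := (m_pred m).
Local Notation z0 := (m_zero m).
Local Notation A := (m_A m).
Local Notation cnt := (m_interp m).
Local Notation vt := (vtrue Sg).
Local Notation vf := (vfalse Sg).
Local Notation V := (EVar Sg).
Local Notation TT := (ECon (@c_true Sg) []).
Local Notation FF := (ECon (@c_false Sg) []).
Local Notation BOT := (EChoose (@nil (expr Sg))).
Local Notation Ty := (ty (sort Sg)).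
Local Notation L := (TSort (@s_list Sg)).
Local Notation B := (TSort (@s_bool Sg)).
Local Notation alpha := (m_alpha m).
Local Notation F_ty := (TArrow B alpha).

Inductive op := Seed | Pred | Zero | Ones | Dec | DecAt | LowerSet | Bit | EqCnt | Below
  | AllClear | SomeSet.

Definition all_ops :=
  [Seed; Pred; Zero; Ones; Dec; DecAt; LowerSet; Bit; EqCnt; Below; AllClear; SomeSet].

Lemma in_all_ops o : In o all_ops.
Proof. destruct o; simpl; tauto. Qed.

Definition op_index (o : op) : nat :=
  match o with
  | Seed => 0 | Pred => 1 | Zero => 2 | Ones => 3 | Dec => 4 | DecAt => 5 | LowerSet => 6
  | Bit => 7 | EqCnt => 8 | Below => 9 | AllClear => 10 | SomeSet => 11
  end.

Definition op_of_index (i : nat) : op :=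
  match i with
  | 0 => Seed | 1 => Pred | 2 => Zero | 3 => Ones | 4 => Dec | 5 => DecAt | 6 => LowerSet
  | 7 => Bit | 8 => EqCnt | 9 => Below | 10 => AllClear | _ => SomeSet
  end.

Lemma op_of_index_index o : op_of_index (op_index o) = o.
Proof. destruct o; reflexivity. Qed.

Definition sym (o : op) : fsym := b + op_index o.

Lemma sym_inj o o' : sym o = sym o' -> o = o'.
Proof.
  unfold sym. intros E. rewrite <- (op_of_index_index o), <- (op_of_index_index o').
  f_equal. lia.
Qed.

Lemma sym_notin_D o : ~ In (sym o) D.
Proof. apply b_fresh. Qed.

Definition op_app (o : op) (es : list (expr Sg)) := apps (EFun Sg (sym o)) es.
Definition seed_app (e : expr Sg) := apps (EFun Sg s0) [e].
Definition pred_app (e e' : expr Sg) := apps (EFun Sg p0) [e; e'].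
Definition zero_app (e e' : expr Sg) := apps (EFun Sg z0) [e; e'].

(* Variable 0 is always the input list.  The last argument of [Dec], [LowerSet] and [Bit]
   may have several values and is split off for [eval_op_app_snoc].  [SomeSet] yields false
   as soon as [F true] has a value, whatever the zero test says about it. *)
Definition op_rhs (o : op) : expr Sg :=
  match o with
  | Seed => op_app Ones [V 0]
  | Pred => op_app Dec [V 0; V 1]
  | Zero => EChoose [op_app AllClear [V 0; V 1; seed_app (V 0)]; op_app SomeSet [V 0; V 1]]
  | Ones => guard (V 1) (op_app Below [V 0; seed_app (V 0)])
  | Dec => op_app DecAt ([V 0; V 1; V 2] ++ [op_app Below [V 0; seed_app (V 0)]])
  | DecAt =>
      EChoose [guard (op_app Bit [V 0; V 1; V 2; V 3])
                 (guard (op_app LowerSet [V 0; V 1; V 3]) (V 3));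
               guard (op_app Bit [V 0; V 1; EIf (V 2) FF TT; V 3])
                 (guard (op_app AllClear [V 0; V 1; pred_app (V 0) (V 3)]) (V 3))]
  | LowerSet => op_app Bit ([V 0; V 1; TT] ++ [op_app Below [V 0; pred_app (V 0) (V 2)]])
  | Bit => op_app EqCnt ([V 0; V 3] ++ [EApp (V 1) (V 2)])
  | EqCnt => EIf (zero_app (V 0) (V 1)) (guard (zero_app (V 0) (V 2)) TT)
               (EIf (zero_app (V 0) (V 2)) BOT
                  (op_app EqCnt [V 0; pred_app (V 0) (V 1); pred_app (V 0) (V 2)]))
  | Below => EIf (zero_app (V 0) (V 1)) BOT
               (EChoose [V 1; op_app Below [V 0; pred_app (V 0) (V 1)]])
  | AllClear => EIf (zero_app (V 0) (V 2)) TT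
                  (guard (op_app Bit [V 0; V 1; FF; V 2])
                     (op_app AllClear [V 0; V 1; pred_app (V 0) (V 2)]))
  | SomeSet => EIf (zero_app (V 0) (EApp (V 1) TT)) FF FF
  end.

Definition op_args (o : op) : list Ty :=
  match o with
  | Seed => [L] | Pred => [L; F_ty] | Zero => [L; F_ty] | Ones => [L; B] | Dec => [L; F_ty; B]
  | DecAt => [L; F_ty; B; alpha] | LowerSet => [L; F_ty; alpha] | Bit => [L; F_ty; B; alpha]
  | EqCnt => [L; alpha; alpha] | Below => [L; alpha] | AllClear => [L; F_ty; alpha]
  | SomeSet => [L; F_ty]
  end.

Definition op_res (o : op) : Ty :=
  match o with
  | Seed | Pred => F_ty
  | Ones | Dec | DecAt | Below => alpha
  | Zero | LowerSet | Bit | EqCnt | AllClear | SomeSet => B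
  end.

Definition op_arity (o : op) : nat := length (op_args o).

Definition op_clause (o : op) : clause Sg := mkClause (sym o) (var_pats Sg (op_arity o)) (op_rhs o).

Definition op_clauses : program Sg := map op_clause all_ops.
Definition new_prog : program Sg := op_clauses ++ p.

Lemma m_wf : wf_program dt p.
Proof. apply m_counting. Qed.

Lemma m_closed cl : In cl p -> In (cl_f cl) D /\ incl (expr_fsyms (cl_rhs cl)) D.
Proof.
  intros Hcl. apply m_counting in Hcl as [Hf Hrhs]. split; [exact Hf|intros f; apply Hrhs].
Qed.

Lemma m_rhs_vars cl : In cl p -> incl (expr_vars (cl_rhs cl)) (lhs_vars cl).
Proof. intros Hcl x. apply (proj1 m_wf cl Hcl). Qed.

Lemma m_cons_free cl : In cl p -> cons_free_clause cl.
Proof. apply m_counting. Qed.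

Lemma m_values n v : A n v -> val_type dt (arity p) v alpha /\ incl (val_fsyms v) D.
Proof. intros Hv. apply m_counting in Hv as [Ht Hf]. split; [exact Ht|intros f; apply Hf]. Qed.

Lemma seed_in_D : In s0 D.
Proof. apply m_counting. Qed.

Lemma pred_in_D : In p0 D.
Proof. apply m_counting. Qed.

Lemma zero_in_D : In z0 D.
Proof. apply m_counting. Qed.

Lemma op_clauses_fresh cl : In cl op_clauses -> ~ In (cl_f cl) D.
Proof. unfold op_clauses. rewrite in_map_iff. intros (o & <- & _). apply sym_notin_D. Qed.

Lemma in_new_prog_sym cl o : In cl new_prog -> cl_f cl = sym o -> cl = op_clause o.
Proof.
  unfold new_prog, op_clauses. rewrite in_app_iff, in_map_iff. intros [(o' & <- & _)|Hcl] Hf.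
  - simpl in Hf. apply sym_inj in Hf. subst. reflexivity.
  - exfalso. apply (@sym_notin_D o). rewrite <- Hf. apply m_closed, Hcl.
Qed.

Lemma new_prog_consistent : consistent_arity new_prog.
Proof.
  intros cl1 cl2 H1 H2 Hf. assert (Hp : consistent_arity p) by exact (proj2 m_wf).
  unfold new_prog in H1, H2. apply in_app_or in H1 as [H1|H1].
  - unfold op_clauses in H1. apply in_map_iff in H1 as (o & <- & _).
    rewrite (in_new_prog_sym H2 (eq_sym Hf)). reflexivity.
  - apply in_app_or in H2 as [H2|H2]; [|apply Hp; auto].
    exfalso. apply (op_clauses_fresh H2). rewrite <- Hf. apply m_closed, H1.
Qed.

Lemma op_clause_in_new_prog o : In (op_clause o) new_prog.
Proof. apply in_or_app. left. apply in_map, in_all_ops. Qed.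

Lemma arity_op o : arity new_prog (sym o) = op_arity o.
Proof.
  change (sym o) with (cl_f (op_clause o)).
  rewrite (arity_clause new_prog_consistent (op_clause_in_new_prog o)).
  unfold op_clause, var_pats. simpl. rewrite length_map, length_seq. reflexivity.
Qed.

Lemma op_rhs_vars o x : In x (expr_vars (op_rhs o)) -> x < op_arity o.
Proof. destruct o; cbn; intuition lia. Qed.

Lemma call_op o vs w : length vs = op_arity o ->
  call new_prog (sym o) vs w <-> eval new_prog (env vs) (op_rhs o) w.
Proof.
  intros Hlen. change (sym o) with (cl_f (op_clause o)).
  change (op_rhs o) with (cl_rhs (op_clause o)). apply call_var_clause.
  - exact new_prog_consistent.
  - apply op_clause_in_new_prog.
  - intros cl' Hcl' Hf. exact (in_new_prog_sym Hcl' Hf).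
  - simpl. rewrite Hlen. reflexivity.
  - simpl. rewrite Hlen. apply op_rhs_vars.
Qed.

Lemma call_new_prog_iff f vs w : In f D -> vals_over D vs -> call new_prog f vs w <-> call p f vs w.
Proof.
  apply call_extend_iff.
  - exact m_closed.
  - exact m_rhs_vars.
  - exact op_clauses_fresh.
Qed.

Lemma arity_new_prog_D f : In f D -> arity new_prog f = arity p f.
Proof. apply arity_extend. exact op_clauses_fresh. Qed.

Lemma blist_fsyms cs : val_fsyms (blist Sg cs) = [].
Proof. induction cs as [|[] cs IH]; simpl; rewrite ?IH; reflexivity. Qed.

Lemma eval_op_app g o es ws w : length es = op_arity o -> Forall2 (evals_to new_prog g) es ws ->
  eval new_prog g (op_app o es) w <-> call new_prog (sym o) ws w.
Proof.
  intros Hlen Hs. apply eval_apps_evals_to; auto.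
  - exact new_prog_consistent.
  - rewrite arity_op. lia.
Qed.

Lemma eval_op_app_snoc g o es e ws w : S (length es) = op_arity o ->
  Forall2 (evals_to new_prog g) es ws ->
  eval new_prog g (op_app o (es ++ [e])) w <->
  exists v, eval new_prog g e v /\ call new_prog (sym o) (ws ++ [v]) w.
Proof.
  intros Hlen Hs. apply eval_apps_evals_to_snoc; auto.
  - exact new_prog_consistent.
  - rewrite arity_op. lia.
Qed.

Lemma eval_op_app_partial g o es ws w : length es < op_arity o ->
  Forall2 (evals_to new_prog g) es ws -> eval new_prog g (op_app o es) w <-> w = VFun (sym o) ws.
Proof.
  intros Hlen Hs. unfold op_app.
  rewrite eval_apps_evals_to; eauto using new_prog_consistent; [|rewrite arity_op; lia].
  apply call_partial_iff; [exact new_prog_consistent|].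
  rewrite arity_op, <- (Forall2_length Hs). exact Hlen.
Qed.

Definition vbool (x : bool) : val Sg := if x then vt else vf.

Lemma vtrue_neq_vfalse : vt <> vf.
Proof. intros E. injection E. apply c_true_false. Qed.

Lemma vtrue_vbool x : vt = vbool x <-> x = true.
Proof. destruct x; simpl; split; auto using vtrue_neq_vfalse; discriminate. Qed.

Lemma evals_to_true g : evals_to new_prog g TT (vbool true).
Proof. apply evals_to_con_nil. Qed.

Lemma evals_to_false g : evals_to new_prog g FF (vbool false).
Proof. apply evals_to_con_nil. Qed.

Lemma evals_to_neg g y x : g y = vbool x -> evals_to new_prog g (EIf (V y) FF TT) (vbool (negb x)).
Proof.
  intros Gy w. rewrite eval_if_iff, !eval_var_iff, !eval_con_nil_iff, Gy.
  destruct x; simpl; intuition (try discriminate); exfalso; eauto using vtrue_neq_vfalse.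
Qed.

Section Input.
Variable n : nat.
Variable cs : list bool.
Hypothesis cs_length : length cs = n.
Local Notation bl := (blist Sg cs).
Local Notation N := (P n - 1).

Lemma input_over : vals_over D [bl].
Proof. unfold vals_over. simpl. rewrite blist_fsyms. intros ? []. Qed.

Lemma args_over v : A n v -> vals_over D [bl; v].
Proof.
  intros Hv. unfold vals_over. simpl. rewrite blist_fsyms, app_nil_r. apply (m_values Hv).
Qed.

Lemma m_seed_spec :
  exists sv, A n sv /\ cnt n sv = N /\ forall w, call new_prog s0 [bl] w <-> w = sv.
Proof.
  destruct m_counting as (_ & _ & _ & _ & _ & _ & _ & _ & _ & _ & _ & Hsem).
  destruct (Hsem n cs cs_length) as ((sv & Hcall & Huniq & Hsv & Hcnt) & _).
  exists sv. repeat split; auto.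
  - intros Hw. apply Huniq. apply call_new_prog_iff in Hw; auto using seed_in_D, input_over.
  - intros ->. apply call_new_prog_iff; auto using seed_in_D, input_over.
Qed.

Lemma m_pred_spec v : A n v -> 0 < cnt n v ->
  exists pv, A n pv /\ cnt n pv = cnt n v - 1 /\ forall w, call new_prog p0 [bl; v] w <-> w = pv.
Proof.
  intros Hv Hpos.
  destruct m_counting as (_ & _ & _ & _ & _ & _ & _ & _ & _ & _ & _ & Hsem).
  destruct (Hsem n cs cs_length) as (_ & Hpred & _).
  destruct (Hpred v (cnt n v) Hv eq_refl Hpos) as (pv & Hcall & Huniq & Hpv & Hcnt).
  exists pv. repeat split; auto.
  - intros Hw. apply Huniq. apply call_new_prog_iff in Hw; auto using pred_in_D, args_over.
  - intros ->. apply call_new_prog_iff; auto using pred_in_D, args_over.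
Qed.

Lemma m_zero_spec v : A n v ->
  (call new_prog z0 [bl; v] vt <-> cnt n v = 0) /\ (call new_prog z0 [bl; v] vf <-> 0 < cnt n v).
Proof.
  intros Hv. destruct m_counting as (_ & _ & _ & _ & _ & _ & _ & _ & _ & _ & _ & Hsem).
  destruct (Hsem n cs cs_length) as (_ & _ & Hzero).
  rewrite !call_new_prog_iff; auto using zero_in_D, args_over.
Qed.

Lemma arity_m_seed : 1 <= arity new_prog s0.
Proof.
  destruct m_seed_spec as (sv & _ & _ & Hsv).
  assert (Hc : call new_prog s0 [bl] sv) by (apply Hsv; reflexivity).
  apply call_length in Hc; [exact Hc|exact new_prog_consistent].
Qed.

Lemma arity_m_pred : 2 <= arity new_prog p0.
Proof. rewrite arity_new_prog_D by exact pred_in_D. exact pred_binary. Qed.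

Lemma arity_m_zero : 2 <= arity new_prog z0.
Proof.
  destruct m_seed_spec as (sv & Hsv & _). destruct (m_zero_spec Hsv) as [Hz Hnz].
  assert (Hc : call new_prog z0 [bl; sv] vt \/ call new_prog z0 [bl; sv] vf).
  { destruct (Nat.eq_dec (cnt n sv) 0); [left; apply Hz|right; apply Hnz]; lia. }
  destruct Hc as [Hc|Hc]; apply call_length in Hc; auto; exact new_prog_consistent.
Qed.

Lemma evals_to_seed_app g sv : g 0 = bl -> (forall w, call new_prog s0 [bl] w <-> w = sv) ->
  evals_to new_prog g (seed_app (V 0)) sv.
Proof.
  intros G0 Hsv w. unfold seed_app. rewrite <- Hsv.
  apply eval_apps_evals_to; [exact new_prog_consistent|exact arity_m_seed|].
  rewrite <- G0. apply Forall2_cons; [apply evals_to_var|apply Forall2_nil].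
Qed.

Lemma evals_to_pred_app g x v pv : g 0 = bl -> g x = v ->
  (forall w, call new_prog p0 [bl; v] w <-> w = pv) ->
  evals_to new_prog g (pred_app (V 0) (V x)) pv.
Proof.
  intros G0 Gx Hpv w. unfold pred_app. rewrite <- Hpv.
  apply eval_apps_evals_to; [exact new_prog_consistent|exact arity_m_pred|].
  rewrite <- G0, <- Gx. repeat apply Forall2_cons; try apply evals_to_var; try apply Forall2_nil.
Qed.

Lemma eval_zero_app g e w : g 0 = bl ->
  eval new_prog g (zero_app (V 0) e) w <->
  exists v, eval new_prog g e v /\ call new_prog z0 [bl; v] w.
Proof.
  intros G0. unfold zero_app. change [V 0; e] with ([V 0] ++ [e]).
  apply eval_apps_evals_to_snoc with (ws := [bl]); [exact new_prog_consistent|exact arity_m_zero|].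
  rewrite <- G0. apply Forall2_cons; [apply evals_to_var|apply Forall2_nil].
Qed.

Lemma eval_if_zero g x v X Y w : g 0 = bl -> g x = v -> A n v ->
  eval new_prog g (EIf (zero_app (V 0) (V x)) X Y) w <->
  (cnt n v = 0 /\ eval new_prog g X w) \/ (0 < cnt n v /\ eval new_prog g Y w).
Proof.
  intros G0 Gx Hv. destruct (m_zero_spec Hv) as [Hz Hnz].
  rewrite eval_if_iff, !eval_zero_app by exact G0.
  setoid_rewrite eval_var_iff. rewrite Gx, <- Hz, <- Hnz. firstorder congruence.
Qed.

Ltac solve_args :=
  repeat first
    [ apply Forall2_nil
    | apply Forall2_cons
    | apply evals_to_var
    | apply evals_to_true
    | apply evals_to_false
    | eapply evals_to_neg; reflexivity
    | eapply evals_to_pred_app; [reflexivity|reflexivity|eassumption]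
    | eapply evals_to_seed_app; [reflexivity|eassumption] ].

Lemma call_eqcnt i j w : A n i -> A n j ->
  call new_prog (sym EqCnt) [bl; i; j] w <-> w = vt /\ cnt n i = cnt n j.
Proof.
  remember (cnt n i) as c eqn:Hc. revert i j w Hc.
  induction c as [|c IH]; intros i j w Hc Hi Hj; rewrite call_op by reflexivity; cbn [op_rhs];
    rewrite (eval_if_zero (x := 1) (v := i)), (eval_if_zero (x := 2) (v := j)),
      (eval_if_zero (x := 2) (v := j)), eval_con_nil_iff, eval_choose_nil_iff by auto.
  - intuition lia.
  - destruct (m_pred_spec Hi ltac:(lia)) as (pi & Hpi & Hcpi & Hcall_i).
    destruct (Nat.eq_dec (cnt n j) 0) as [Ej|Ej]; [intuition lia|].
    destruct (m_pred_spec Hj ltac:(lia)) as (pj & Hpj & Hcpj & Hcall_j).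
    erewrite eval_op_app by (reflexivity || solve_args).
    rewrite IH by (auto; lia). intuition lia.
Qed.

Lemma call_below_sound i w : A n i ->
  call new_prog (sym Below) [bl; i] w -> A n w /\ 1 <= cnt n w <= cnt n i.
Proof.
  remember (cnt n i) as c eqn:Hc. revert i w Hc.
  induction c as [|c IH]; intros i w Hc Hi; rewrite call_op by reflexivity; cbn [op_rhs];
    rewrite (eval_if_zero (x := 1) (v := i)), eval_choose_nil_iff by auto; [intuition lia|].
  destruct (m_pred_spec Hi ltac:(lia)) as (pi & Hpi & Hcpi & Hcall_i).
  rewrite eval_choose_pair_iff, eval_var_iff.
  erewrite eval_op_app by (reflexivity || solve_args).
  intros [[_ []] | (_ & [-> | Hw])]; [cbn [env nth]; split; [exact Hi|lia]|].
  apply IH in Hw as (Aw & Hw); [split; [exact Aw|lia]|lia|exact Hpi].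
Qed.

Lemma call_below_complete i t : A n i -> 1 <= t <= cnt n i ->
  exists w, call new_prog (sym Below) [bl; i] w /\ A n w /\ cnt n w = t.
Proof.
  remember (cnt n i) as c eqn:Hc. revert i t Hc.
  induction c as [|c IH]; intros i t Hc Hi Ht; [lia|].
  destruct (m_pred_spec Hi ltac:(lia)) as (pi & Hpi & Hcpi & Hcall_i).
  assert (Hw : exists w, eval new_prog (env [bl; i])
                 (EChoose [V 1; op_app Below [V 0; pred_app (V 0) (V 1)]]) w /\
               A n w /\ cnt n w = t).
  { setoid_rewrite eval_choose_pair_iff. setoid_rewrite eval_var_iff.
    destruct (Nat.eq_dec t (cnt n i)) as [->|Et]; [exists i; auto|].
    destruct (IH pi t) as (w & Hw & Aw & Hcw); [lia|exact Hpi|lia|].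
    exists w. split; auto. right. erewrite eval_op_app by (reflexivity || solve_args). exact Hw. }
  destruct Hw as (w & Hw & Aw & Hcw). exists w. split; auto.
  rewrite call_op by reflexivity. cbn [op_rhs].
  rewrite (eval_if_zero (x := 1) (v := i)) by auto. right. split; [lia|exact Hw].
Qed.

Record represents (F : val Sg) (k : nat) : Prop := {
  rep_bound : k < 2 ^ N;
  rep_sound : forall x w, apply_val new_prog F (vbool x) w ->
    A n w /\ 1 <= cnt n w <= N /\ Nat.testbit k (cnt n w - 1) = x;
  rep_complete : forall x t, 1 <= t <= N -> Nat.testbit k (t - 1) = x ->
    exists w, apply_val new_prog F (vbool x) w /\ A n w /\ cnt n w = t }.

Section Represented.
Variables (F : val Sg) (k : nat).
Hypothesis F_rep : represents F k.

Lemma call_bit x i w : A n i ->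
  call new_prog (sym Bit) [bl; F; vbool x; i] w <->
  w = vt /\ 1 <= cnt n i <= N /\ Nat.testbit k (cnt n i - 1) = x.
Proof.
  intros Hi. rewrite call_op by reflexivity. cbn [op_rhs].
  erewrite eval_op_app_snoc by (reflexivity || solve_args).
  setoid_rewrite eval_app_var_iff. setoid_rewrite eval_var_iff. cbn [env nth app]. split.
  - intros (u & (v & -> & Hu) & Hc).
    destruct (rep_sound F_rep Hu) as (Au & Hr & Hb).
    apply call_eqcnt in Hc as [-> Hcu]; auto. rewrite Hcu. auto.
  - intros (-> & Hr & Hb). destruct (rep_complete F_rep Hr Hb) as (u & Hu & Au & Hcu).
    exists u. split; [exists (vbool x); auto|]. apply call_eqcnt; auto.
Qed.

Lemma call_all_clear i w : A n i -> cnt n i <= N ->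
  call new_prog (sym AllClear) [bl; F; i] w <->
  w = vt /\ forall t, t < cnt n i -> Nat.testbit k t = false.
Proof.
  remember (cnt n i) as c eqn:Hc. revert i w Hc.
  induction c as [|c IH]; intros i w Hc Hi HN; rewrite call_op by reflexivity; cbn [op_rhs];
    rewrite (eval_if_zero (x := 2) (v := i)), eval_con_nil_iff by auto.
  - split; [intros [[_ ->]|[? _]]; [split; [reflexivity|intros; lia]|lia]|].
    intros [-> _]. left. split; [lia|reflexivity].
  - destruct (m_pred_spec Hi ltac:(lia)) as (pi & Hpi & Hcpi & Hcall_i).
    rewrite eval_guard_iff. erewrite !eval_op_app by (reflexivity || solve_args).
    rewrite call_bit, IH by (auto; lia). cbn [env nth]. split.
    + intros [[? _]|(_ & (_ & _ & Hb) & -> & Hall)]; [lia|]. split; [reflexivity|].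
      intros t Ht. destruct (Nat.eq_dec t c) as [->|Et]; [rewrite <- Hb; f_equal; lia|].
      apply Hall. lia.
    + intros (-> & Hall). right. split; [lia|]. split.
      * split; [reflexivity|]. split; [lia|]. apply Hall. lia.
      * split; [reflexivity|]. intros t Ht. apply Hall. lia.
Qed.

Lemma call_lower_set j w : A n j -> 1 <= cnt n j <= N ->
  call new_prog (sym LowerSet) [bl; F; j] w <->
  w = vt /\ exists t, t < cnt n j - 1 /\ Nat.testbit k t = true.
Proof.
  intros Hj Hr. destruct (m_pred_spec Hj ltac:(lia)) as (pj & Hpj & Hcpj & Hcall_j).
  rewrite call_op by reflexivity. cbn [op_rhs].
  erewrite eval_op_app_snoc by (reflexivity || solve_args).
  setoid_rewrite (eval_op_app (ws := [bl; pj])); [|reflexivity|solve_args]. split.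
  - intros (u & Hu & Hc). cbn [app] in Hc.
    destruct (call_below_sound Hpj Hu) as (Au & Hru).
    apply call_bit in Hc as (-> & _ & Hb); auto.
    split; [reflexivity|]. exists (cnt n u - 1). split; [lia|exact Hb].
  - intros (-> & t & Ht & Hb).
    destruct (call_below_complete (t := S t) Hpj) as (u & Hu & Au & Hcu); [lia|].
    exists u. split; [exact Hu|]. cbn [app]. apply call_bit; auto.
    split; [reflexivity|]. rewrite Hcu. split; [lia|]. rewrite <- Hb. f_equal. lia.
Qed.

Lemma call_dec_at x j w : 0 < k -> A n j -> 1 <= cnt n j <= N ->
  call new_prog (sym DecAt) [bl; F; vbool x; j] w <->
  w = j /\ Nat.testbit (k - 1) (cnt n j - 1) = x.
Proof.
  intros Hk Hj Hr. destruct (m_pred_spec Hj ltac:(lia)) as (pj & Hpj & Hcpj & Hcall_j).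
  rewrite call_op by reflexivity. cbn [op_rhs].
  rewrite eval_choose_pair_iff, !eval_guard_iff, !eval_var_iff.
  do 4 erewrite eval_op_app by (reflexivity || solve_args). cbn [env nth].
  rewrite !call_bit, call_lower_set, call_all_clear, testbit_pred_iff, Hcpj by (auto; lia).
  intuition.
Qed.

Lemma call_some_set w : call new_prog (sym SomeSet) [bl; F] w <-> w = vf /\ 0 < k.
Proof.
  rewrite call_op by reflexivity. cbn [op_rhs].
  rewrite eval_if_iff, !eval_zero_app, !eval_con_nil_iff by reflexivity.
  setoid_rewrite eval_app_var_iff. setoid_rewrite eval_con_nil_iff. cbn [env nth]. split.
  - intros [[(v & (u & -> & Hv) & _) ->]|[(v & (u & -> & Hv) & _) ->]];
      split; auto; destruct (rep_sound F_rep (x := true) Hv) as (_ & _ & Hb);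
      (destruct k; [rewrite Nat.bits_0 in Hb; discriminate|lia]).
  - intros (-> & Hk). right. split; [|reflexivity].
    destruct (low_bits_dec k N) as [(t & Ht & Hb)|Hclear];
      [|apply low_bits_clear_0 in Hclear; [lia|apply F_rep]].
    destruct (rep_complete F_rep (t := S t) (x := true)) as (v & Hv & Av & Hcv);
      [lia|rewrite <- Hb; f_equal; lia|].
    exists v. split; [exists vt; auto|]. apply (m_zero_spec Av). lia.
Qed.

End Represented.

Lemma represents_ones : represents (VFun (sym Ones) [bl]) (2 ^ N - 1).
Proof.
  destruct m_seed_spec as (sv & Hsv & Hcsv & Hcall_s).
  assert (Hones : forall x w, apply_val new_prog (VFun (sym Ones) [bl]) (vbool x) w <->
                         x = true /\ call new_prog (sym Below) [bl; sv] w).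
  { intros x w. cbn [apply_val app]. rewrite call_op by reflexivity. cbn [op_rhs].
    rewrite eval_guard_iff, eval_var_iff. cbn [env nth]. rewrite vtrue_vbool.
    erewrite eval_op_app by (reflexivity || solve_args). reflexivity. }
  constructor.
  - pose proof (Nat.pow_nonzero 2 N). lia.
  - intros x w [-> Hw]%Hones. destruct (call_below_sound Hsv Hw) as (Aw & Hr).
    split; [exact Aw|]. split; [lia|]. apply testbit_ones. lia.
  - intros x t Ht Hb. rewrite testbit_ones in Hb by lia. subst x.
    destruct (call_below_complete (t := t) Hsv) as (w & Hw & Aw & Hcw); [lia|].
    exists w. rewrite Hones. auto.
Qed.

Lemma represents_dec F k : represents F k -> 0 < k -> represents (VFun (sym Dec) [bl; F]) (k - 1).
Proof.
  intros F_rep Hk. destruct m_seed_spec as (sv & Hsv & Hcsv & Hcall_s).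
  assert (Hdec : forall x w, apply_val new_prog (VFun (sym Dec) [bl; F]) (vbool x) w <->
     exists u, call new_prog (sym Below) [bl; sv] u /\
               call new_prog (sym DecAt) [bl; F; vbool x; u] w).
  { intros x w. cbn [apply_val app]. rewrite call_op by reflexivity. cbn [op_rhs].
    erewrite eval_op_app_snoc by (reflexivity || solve_args).
    setoid_rewrite (eval_op_app (ws := [bl; sv])); [|reflexivity|solve_args]. reflexivity. }
  constructor.
  - pose proof (rep_bound F_rep). lia.
  - intros x w (u & Hu & Hw)%Hdec. destruct (call_below_sound Hsv Hu) as (Au & Hr).
    rewrite Hcsv in Hr. apply (call_dec_at F_rep) in Hw as [-> Hb]; auto.
  - intros x t Ht Hb. destruct (call_below_complete (t := t) Hsv) as (u & Hu & Au & Hcu); [lia|].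
    exists u. rewrite Hdec. split; [|auto]. exists u. split; [exact Hu|].
    apply (call_dec_at F_rep); auto; [lia|]. rewrite Hcu. auto.
Qed.

Lemma call_zero F k : represents F k ->
  (call new_prog (sym Zero) [bl; F] vt <-> k = 0) /\
  (call new_prog (sym Zero) [bl; F] vf <-> 0 < k).
Proof.
  intros F_rep. destruct m_seed_spec as (sv & Hsv & Hcsv & Hcall_s).
  assert (Hzero : forall w, call new_prog (sym Zero) [bl; F] w <->
     (w = vt /\ forall t, t < N -> Nat.testbit k t = false) \/ (w = vf /\ 0 < k)).
  { intros w. rewrite call_op by reflexivity. cbn [op_rhs].
    rewrite eval_choose_pair_iff. do 2 erewrite eval_op_app by (reflexivity || solve_args).
    rewrite (call_all_clear F_rep), (call_some_set F_rep), Hcsv by (auto; lia). reflexivity. }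
  rewrite !Hzero. pose proof vtrue_neq_vfalse. split; split.
  - intros [[_ Hclear]|[? _]]; [|congruence]. apply (low_bits_clear_0 (rep_bound F_rep) Hclear).
  - intros ->. left. split; [reflexivity|]. intros t _. apply Nat.bits_0.
  - intros [[? _]|[_ Hk]]; [congruence|exact Hk].
  - intros Hk. right. auto.
Qed.

Lemma call_seed w : call new_prog (sym Seed) [bl] w <-> w = VFun (sym Ones) [bl].
Proof.
  rewrite call_op by reflexivity. cbn [op_rhs].
  apply eval_op_app_partial; [cbn; lia|solve_args].
Qed.

Lemma call_pred v w : call new_prog (sym Pred) [bl; v] w <-> w = VFun (sym Dec) [bl; v].
Proof.
  rewrite call_op by reflexivity. cbn [op_rhs].
  apply eval_op_app_partial; [cbn; lia|solve_args].
Qed.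

End Input.

Definition op_type (o : op) : Ty := arrows (op_args o) (op_res o).

Definition new_dtype (f : fsym) : Ty :=
  if in_dec Nat.eq_dec f D then dt f else op_type (op_of_index (f - b)).

Lemma new_dtype_sym o : new_dtype (sym o) = op_type o.
Proof.
  unfold new_dtype. destruct (in_dec Nat.eq_dec (sym o) D) as [H|_].
  - exfalso. exact (sym_notin_D H).
  - unfold sym. replace (b + op_index o - b) with (op_index o) by lia.
    rewrite op_of_index_index. reflexivity.
Qed.

Lemma new_dtype_D f : In f D -> new_dtype f = dt f.
Proof. unfold new_dtype. destruct (in_dec Nat.eq_dec f D); [reflexivity|contradiction]. Qed.

Definition new_D : list fsym := map sym all_ops ++ D.

Lemma sym_in_new_D o : In (sym o) new_D.
Proof. apply in_or_app. left. apply in_map, in_all_ops. Qed.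

Lemma D_in_new_D f : In f D -> In f new_D.
Proof. intros Hf. apply in_or_app. right. exact Hf. Qed.

Definition op_env (o : op) (x : var) : Ty := nth x (op_args o) L.

Lemma has_type_fun G f t : new_dtype f = t -> has_type new_dtype G (EFun Sg f) t.
Proof. intros <-. constructor. Qed.

Lemma has_type_var G x t : G x = t -> has_type new_dtype G (V x) t.
Proof. intros <-. constructor. Qed.

Lemma has_type_bool_con G (c : con Sg) : con_args c = [] -> con_res c = s_bool ->
  has_type new_dtype G (ECon c []) B.
Proof. intros Hc Hr. rewrite <- Hr. constructor. rewrite Hc. constructor. Qed.

Lemma fun_type_D f t : In f D -> dt f = t -> new_dtype f = t.
Proof. intros Hf <-. apply new_dtype_D, Hf. Qed.

Ltac type_expr :=
  repeat match goal with
  | |- has_type _ _ (EApp _ _) _ => eapply T_App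
  | |- has_type _ _ (EFun _ (sym _)) _ => apply has_type_fun; rewrite new_dtype_sym; reflexivity
  | |- has_type _ _ (EFun _ _) _ =>
      apply has_type_fun, fun_type_D; apply m_counting
  | |- has_type _ _ (EVar _ _) _ => apply has_type_var; reflexivity
  | |- has_type _ _ (EIf _ _ _) _ => apply T_If
  | |- has_type _ _ (EChoose _) _ =>
      let Hin := fresh "Hin" in
      apply T_Choose; intros ? Hin; simpl in Hin; repeat destruct Hin as [<-|Hin]; try contradiction
  | |- has_type _ _ (ECon _ []) _ => apply has_type_bool_con; apply c_true_ty || apply c_false_ty
  end.

Lemma op_clause_typed o : clause_typed new_dtype (op_env o) (op_clause o).
Proof.
  exists (op_res o). split.
  - unfold lhs_expr, op_clause, var_pats. cbn [cl_lhs cl_f].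
    apply has_type_apply_vars. unfold op_env, op_arity. rewrite map_nth_seq.
    apply has_type_fun, new_dtype_sym.
  - destruct o; cbn [op_rhs op_app seed_app pred_app zero_app apps fold_left app cl_rhs op_clause];
      type_expr.
Qed.

Lemma lhs_vars_op_clause o : lhs_vars (op_clause o) = seq 0 (op_arity o).
Proof. apply lhs_vars_var_pats. Qed.

Lemma op_clause_wf o : wf_clause new_dtype (op_clause o).
Proof.
  split; [rewrite lhs_vars_op_clause; apply seq_NoDup|]. split.
  - intros x Hx. rewrite lhs_vars_op_clause. apply in_seq. apply op_rhs_vars in Hx. lia.
  - exists (op_env o). apply op_clause_typed.
Qed.

Lemma op_args_order o t : In t (op_args o) -> ord t <= 1.
Proof. pose proof alpha_order. destruct o; simpl; intuition (subst; cbn [ord]; lia). Qed.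

Lemma op_clause_order o : exists G, clause_typed new_dtype G (op_clause o) /\
  forall x, In x (lhs_vars (op_clause o)) -> ord (G x) <= 1.
Proof.
  exists (op_env o). split; [apply op_clause_typed|]. intros x Hx.
  rewrite lhs_vars_op_clause in Hx. apply in_seq in Hx.
  apply op_args_order with o, nth_In. apply Hx.
Qed.

Lemma op_clause_cons_free o : cons_free_clause (op_clause o).
Proof.
  intros t Ht (c & es & ->). left. unfold subexprs in Ht.
  destruct o;
    cbn [op_rhs op_app seed_app pred_app zero_app apps fold_left app cl_rhs op_clause] in Ht;
    cbn in Ht; repeat (destruct Ht as [Ht|Ht];
      [first [discriminate Ht | injection Ht as <- <-; exact I] |]); contradiction.
Qed.

Lemma op_clause_symbols o : incl (expr_fsyms (op_rhs o)) new_D.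
Proof.
  destruct o; cbn; intros f Hf; repeat destruct Hf as [<-|Hf]; try contradiction;
    first [apply sym_in_new_D | apply D_in_new_D, m_counting].
Qed.

Lemma clause_typed_new_dtype G cl : In cl p -> clause_typed dt G cl -> clause_typed new_dtype G cl.
Proof.
  intros Hcl (t & Hl & Hr). exists t.
  split; eapply has_type_change_symbols; eauto; intros f Hf;
    apply new_dtype_D.
  - apply lhs_expr_fsyms in Hf as [<-|[]]. apply m_closed, Hcl.
  - apply (proj2 (m_closed Hcl)), Hf.
Qed.

Lemma in_new_prog cl : In cl new_prog -> (exists o, cl = op_clause o) \/ In cl p.
Proof.
  unfold new_prog, op_clauses. rewrite in_app_iff, in_map_iff. intros [(o & <- & _)|Hcl]; eauto.
Qed.

Lemma new_wf : wf_program new_dtype new_prog.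
Proof.
  split; [|exact new_prog_consistent]. intros cl [(o & ->)|Hcl]%in_new_prog; [apply op_clause_wf|].
  destruct (proj1 m_wf cl Hcl) as (Hnd & Hvars & G & Hty).
  split; [exact Hnd|]. split; [exact Hvars|]. exists G. apply clause_typed_new_dtype; auto.
Qed.

Lemma new_order : data_order new_dtype new_prog 1.
Proof.
  intros cl [(o & ->)|Hcl]%in_new_prog; [apply op_clause_order|].
  destruct (m_order Hcl) as (G & Hty & Hord).
  exists G. split; [apply clause_typed_new_dtype|]; auto.
Qed.

Lemma new_cons_free cl : In cl new_prog -> cons_free_clause cl.
Proof. intros [(o & ->)|Hcl]%in_new_prog; [apply op_clause_cons_free|apply m_cons_free, Hcl]. Qed.

Lemma new_closed cl : In cl new_prog ->
  In (cl_f cl) new_D /\ forall f, In f (expr_fsyms (cl_rhs cl)) -> In f new_D.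
Proof.
  intros [(o & ->)|Hcl]%in_new_prog.
  - split; [apply sym_in_new_D|apply op_clause_symbols].
  - destruct (m_closed Hcl) as [Hf Hrhs].
    split; [apply D_in_new_D, Hf|intros f Hin; apply D_in_new_D, Hrhs, Hin].
Qed.

Inductive dec_chain (n : nat) : nat -> val Sg -> Prop :=
  | chain_ones cs : length cs = n -> dec_chain n 0 (VFun (sym Ones) [blist Sg cs])
  | chain_dec d cs F : dec_chain n d F -> length cs = n ->
      dec_chain n (S d) (VFun (sym Dec) [blist Sg cs; F]).

Fixpoint chain_depth (v : val Sg) : nat :=
  match v with VFun _ [_; F] => S (chain_depth F) | _ => 0 end.

Definition max_count (n : nat) : nat := 2 ^ (P n - 1) - 1.

Definition new_A (n : nat) (v : val Sg) : Prop := exists d, dec_chain n d v /\ d <= max_count n.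

Definition new_cnt (n : nat) (v : val Sg) : nat := max_count n - chain_depth v.

Lemma chain_depth_spec n d v : dec_chain n d v -> chain_depth v = d.
Proof. induction 1; simpl; auto. Qed.

Lemma chain_represents n d v : dec_chain n d v -> d <= max_count n ->
  represents n v (max_count n - d).
Proof.
  unfold max_count. induction 1 as [cs Hcs|d cs F HF IH Hcs]; intros Hd.
  - rewrite Nat.sub_0_r. apply represents_ones, Hcs.
  - replace (2 ^ (P n - 1) - 1 - S d) with (2 ^ (P n - 1) - 1 - d - 1) by lia.
    apply represents_dec; auto; [apply IH|]; lia.
Qed.

Lemma chain_val_type n d v : dec_chain n d v ->
  val_type new_dtype (arity new_prog) v F_ty /\ incl (val_fsyms v) new_D.
Proof.
  induction 1 as [cs Hcs|d cs F HF [IHt IHf] Hcs]; split.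
  - apply VT_Fun with (ts := [L]); [repeat constructor; apply blist_val_type| |].
    + rewrite arity_op. cbn. lia.
    + rewrite new_dtype_sym. reflexivity.
  - simpl. rewrite blist_fsyms. intros f [<-|[]]. apply sym_in_new_D.
  - apply VT_Fun with (ts := [L; F_ty]); [repeat constructor; auto; apply blist_val_type| |].
    + rewrite arity_op. cbn. lia.
    + rewrite new_dtype_sym. reflexivity.
  - simpl. rewrite blist_fsyms, app_nil_r. intros f [<-|Hf]; [apply sym_in_new_D|auto].
Qed.

Definition new_module : module Sg :=
  mkModule F_ty new_D new_dtype (sym Seed) (sym Pred) (sym Zero) new_A new_cnt new_prog.

Lemma new_semantics n cs : length cs = n ->
  (exists v, call new_prog (sym Seed) [blist Sg cs] v /\
     (forall v', call new_prog (sym Seed) [blist Sg cs] v' -> v' = v) /\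
     new_A n v /\ new_cnt n v = 2 ^ (P n - 1) - 1) /\
  (forall v i, new_A n v -> new_cnt n v = i -> i > 0 ->
     exists w, call new_prog (sym Pred) [blist Sg cs; v] w /\
       (forall w', call new_prog (sym Pred) [blist Sg cs; v] w' -> w' = w) /\
       new_A n w /\ new_cnt n w = i - 1) /\
  (forall v, new_A n v ->
     (call new_prog (sym Zero) [blist Sg cs; v] vt <-> new_cnt n v = 0) /\
     (call new_prog (sym Zero) [blist Sg cs; v] vf <-> new_cnt n v > 0)).
Proof.
  intros Hcs. unfold new_A, new_cnt. split; [|split].
  - exists (VFun (sym Ones) [blist Sg cs]). setoid_rewrite (call_seed Hcs).
    split; [reflexivity|]. split; [auto|].
    split; [exists 0; split; [apply chain_ones, Hcs|lia]|unfold max_count; simpl; lia].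
  - intros v i (d & Hv & Hd) Hi Hpos. rewrite (chain_depth_spec Hv) in Hi.
    exists (VFun (sym Dec) [blist Sg cs; v]). setoid_rewrite (call_pred Hcs).
    split; [reflexivity|]. split; [auto|].
    split; [exists (S d); split; [apply chain_dec; auto|lia]|].
    simpl. rewrite (chain_depth_spec Hv). lia.
  - intros v (d & Hv & Hd). rewrite (chain_depth_spec Hv).
    destruct (call_zero Hcs (chain_represents Hv Hd)) as [Hz Hnz].
    rewrite Hz, Hnz. lia.
Qed.

Theorem new_module_counting : counting_module (fun n => 2 ^ (P n - 1)) new_module.
Proof.
  unfold counting_module. cbv zeta.
  cbn [new_module m_prog m_dtype m_alpha m_seed m_pred m_zero m_D m_A m_interp].
  split; [repeat constructor; simpl; intros Hin; repeat destruct Hin as [Hin|Hin];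
          try apply sym_inj in Hin; easy|].
  split; [apply sym_in_new_D|]. split; [apply sym_in_new_D|]. split; [apply sym_in_new_D|].
  rewrite !new_dtype_sym. split; [reflexivity|]. split; [reflexivity|]. split; [reflexivity|].
  split; [exact new_wf|]. split; [exact new_cons_free|]. split; [exact new_closed|].
  split; [|exact new_semantics].
  intros n v (d & Hv & _). destruct (chain_val_type Hv) as [Ht Hf].
  split; [exact Ht|intros f; apply Hf].
Qed.

Theorem new_module_order : module_data_order new_module 1.
Proof. exact new_order. Qed.

End Construction.

(** * Counting to 1 *)

Section Trivial.
Variable Sg : signature.
Variable P : nat -> nat.
Hypothesis P_one : forall n, P n = 1.

Local Notation vt := (vtrue Sg).
Local Notation vf := (vfalse Sg).
Local Notation TT := (ECon (@c_true Sg) []).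
Local Notation L := (TSort (@s_list Sg)).
Local Notation B := (TSort (@s_bool Sg)).

Definition triv_clause (f : fsym) : clause Sg :=
  match f with
  | 0 => mkClause 0 (var_pats Sg 1) TT
  | 1 => mkClause 1 (var_pats Sg 2) (EVar Sg 1)
  | _ => mkClause 2 (var_pats Sg 2) TT
  end.

Definition triv_prog : program Sg := map triv_clause [0; 1; 2].

Definition triv_dtype (f : fsym) : ty (sort Sg) :=
  match f with 0 => TArrow L B | _ => TArrow L (TArrow B B) end.

Definition triv_env (x : var) : ty (sort Sg) := match x with 0 => L | _ => B end.

Definition triv_module : module Sg :=
  mkModule B [0; 1; 2] triv_dtype 0 1 2 (fun _ v => v = vt) (fun _ _ => 0) triv_prog.

Lemma in_triv_prog cl : In cl triv_prog -> exists f, f < 3 /\ cl = triv_clause f.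
Proof. simpl. intros [<-|[<-|[<-|[]]]]; [exists 0|exists 1|exists 2]; auto. Qed.

Lemma triv_consistent : consistent_arity triv_prog.
Proof.
  intros c1 c2 (f1 & Hf1 & ->)%in_triv_prog (f2 & Hf2 & ->)%in_triv_prog Hf.
  destruct f1 as [|[|[|]]], f2 as [|[|[|]]]; try lia; simpl in *; congruence.
Qed.

Lemma call_triv f vs w : f < 3 -> length vs = length (cl_lhs (triv_clause f)) ->
  call triv_prog f vs w <-> eval triv_prog (env vs) (cl_rhs (triv_clause f)) w.
Proof.
  intros Hf Hlen.
  replace f with (cl_f (triv_clause f)) at 1 by (destruct f as [|[|[|]]]; simpl; lia).
  apply call_var_clause.
  - exact triv_consistent.
  - apply in_map. simpl. lia.
  - intros cl' (f' & Hf' & ->)%in_triv_prog Heq.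
    destruct f as [|[|[|]]], f' as [|[|[|]]]; try lia; simpl in *; congruence.
  - rewrite Hlen. destruct f as [|[|[|]]]; reflexivity || lia.
  - rewrite Hlen. destruct f as [|[|[|]]]; simpl; intuition lia.
Qed.

Lemma triv_clause_typed f : f < 3 -> clause_typed triv_dtype triv_env (triv_clause f).
Proof.
  intros Hf. destruct (@c_true_ty Sg) as [Ht Htr].
  assert (HTT : has_type triv_dtype triv_env TT B)
    by (rewrite <- Htr; constructor; rewrite Ht; constructor).
  exists B. destruct f as [|[|[|]]]; [| | |lia]; unfold lhs_expr; simpl;
    (split; [repeat econstructor|first [exact HTT|constructor]]);
    change (triv_env 0) with L; try change (triv_env 1) with B; constructor.
Qed.

Lemma triv_wf : wf_program triv_dtype triv_prog.
Proof.
  split; [|exact triv_consistent]. intros cl (f & Hf & ->)%in_triv_prog. split; [|split].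
  - unfold lhs_vars. destruct f as [|[|[|]]]; try lia; repeat constructor; simpl; lia.
  - unfold lhs_vars. destruct f as [|[|[|]]]; try lia; simpl; intuition.
  - exists triv_env. apply triv_clause_typed, Hf.
Qed.

Lemma triv_order : module_data_order triv_module 1.
Proof.
  intros cl (f & Hf & ->)%in_triv_prog. exists triv_env.
  split; [apply triv_clause_typed, Hf|]. intros [|x] _; simpl; lia.
Qed.

Lemma triv_cons_free cl : In cl triv_prog -> cons_free_clause cl.
Proof.
  intros (f & Hf & ->)%in_triv_prog t Ht (c & es & ->). left.
  destruct f as [|[|[|]]]; try lia; simpl in Ht; destruct Ht as [Ht|[]];
    try discriminate; injection Ht as <- <-; exact I.
Qed.

Theorem triv_counting : counting_module P triv_module.
Proof.
  unfold counting_module. cbv zeta.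
  cbn [triv_module m_prog m_dtype m_alpha m_seed m_pred m_zero m_D m_A m_interp].
  pose proof (@vtrue_neq_vfalse Sg) as Hneq.
  split; [repeat constructor; simpl; lia|]. split; [simpl; auto|]. split; [simpl; auto|].
  split; [simpl; auto|]. split; [reflexivity|]. split; [reflexivity|]. split; [reflexivity|].
  split; [exact triv_wf|]. split; [exact triv_cons_free|].
  split.
  { intros cl (f & Hf & ->)%in_triv_prog.
    destruct f as [|[|[|]]]; try lia; simpl; intuition. }
  split.
  { intros n v ->. split; [|intros ? []].
    destruct (@c_true_ty Sg) as [Ht Htr]. rewrite <- Htr. apply val_type_con_nil, Ht. }
  intros n cs Hcs. rewrite P_one. split; [|split].
  - assert (Hseed : forall w, call triv_prog 0 [blist Sg cs] w <-> w = vt).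
    { intros w. rewrite (call_triv (f := 0)) by (simpl; lia). apply eval_con_nil_iff. }
    exists vt. rewrite Hseed. split; [reflexivity|]. split; [|split; reflexivity].
    intros v' Hv'%Hseed. exact Hv'.
  - intros v i _ <-. lia.
  - intros v ->. assert (Hzero : forall w, call triv_prog 2 [blist Sg cs; vt] w <-> w = vt).
    { intros w. rewrite (call_triv (f := 2)) by (simpl; lia). apply eval_con_nil_iff. }
    rewrite !Hzero. split; split; intros; (reflexivity || lia || (exfalso; auto)).
Qed.

End Trivial.

Section Prerequisites.
Variable Sg : signature.
Variable P : nat -> nat.
Variable m : module Sg.
Hypothesis m_counting : counting_module P m.

Lemma counting_pred_binary : (exists n, 2 <= P n) -> 1 < arity (m_prog m) (m_pred m).
Proof.
  intros (n & Hn).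
  destruct m_counting as (_ & _ & _ & _ & _ & _ & _ & Hwf & _ & _ & _ & Hsem).
  destruct (Hsem n (repeat false n) (repeat_length false n))
    as ((v & _ & _ & Hv & Hcv) & Hpred & _).
  destruct (Hpred v (P n - 1) Hv Hcv ltac:(lia)) as (w & Hw & _).
  apply call_length in Hw; [simpl in Hw; lia|exact (proj2 Hwf)].
Qed.

Lemma counting_alpha_order : module_data_order m 1 -> 1 < arity (m_prog m) (m_pred m) ->
  ord (m_alpha m) <= 1.
Proof.
  intros Horder Hbin.
  destruct m_counting as (_ & _ & _ & _ & _ & Hpt & _ & Hwf & _).
  destruct (arity_pos_clause (p := m_prog m) (f := m_pred m)) as (cl & Hcl & Hf); [lia|].
  rewrite <- Hf, (arity_clause (proj2 Hwf) Hcl) in Hbin.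
  destruct (Horder cl Hcl) as (G & (t & Hlhs & _) & Hord).
  unfold lhs_expr in Hlhs.
  destruct (cl_lhs cl) as [|l1 [|l2 ls]] eqn:Hls; simpl in Hbin; [lia|lia|].
  simpl in Hlhs. apply has_type_fold_apps in Hlhs as (t' & Happ).
  apply has_type_app_inv in Happ as (s2 & Happ & Harg).
  apply has_type_app_inv in Happ as (s1 & Hfun & _).
  apply has_type_fun_inv in Hfun. rewrite Hf, Hpt in Hfun. injection Hfun as -> -> ->.
  destruct l2 as [x|c ls2]; simpl in Harg.
  - apply has_type_var_inv in Harg as ->. apply Hord.
    unfold lhs_vars. rewrite Hls. simpl. apply in_or_app. right. left. reflexivity.
  - apply has_type_con_inv in Harg as ->. simpl. lia.
Qed.

End Prerequisites.

Lemma list_max_fresh (D : list nat) k : ~ In (S (list_max D) + k) D.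
Proof.
  intros Hin. assert (H : list_max D <= list_max D) by reflexivity.
  apply list_max_le, Forall_forall with (x := S (list_max D) + k) in H; [lia|exact Hin].
Qed.

Theorem lemma10 (Sg : signature) (P : nat -> nat) (HP : forall n, P n <> 0) :
  (exists m : module Sg, counting_module P m /\
     exists K, K <= 1 /\ module_data_order m K) ->
  exists m' : module Sg,
    counting_module (fun n => 2 ^ (P n - 1)) m' /\ module_data_order m' 1.
Proof.
  intros (m & Hm & K & HK & Horder).
  apply (data_order_mono HK) in Horder.
  destruct (classic (exists n, 2 <= P n)) as [Hbig|Hsmall].
  - pose proof (counting_pred_binary Hm Hbig) as Hbin.
    pose proof (counting_alpha_order Hm Horder Hbin) as Halpha.
    exists (new_module P m (S (list_max (m_D m)))). split.
    + apply new_module_counting; auto using list_max_fresh.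
    + apply new_module_order; auto using list_max_fresh.
  - assert (P_one : forall n, P n = 1).
    { intros n. specialize (HP n). assert (~ 2 <= P n) by eauto. lia. }
    exists (triv_module Sg). split; [|apply triv_order].
    apply triv_counting. intros n. rewrite P_one. reflexivity.
Qed.
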